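(* Suppose $\sigma_x=\sigma_y$ and $\rho\in(0,1)$. Then $(\mathbf a^*,\mathbf b^* )$ is a global pure equilibrium: $K(\mathbf a^*,\mathbf b)\le K(\mathbf a^*,\mathbf b^* )=0\le K(\mathbf a,\mathbf b^* )$ for all $\mathbf a,\mathbf b\in\mathbb R^2$.
   Context: Standing setup. Fix $\sigma_x,\sigma_y>0$ and $\rho\in(-1,1)$, and let $(\xi,\eta)$ be a bivariate normal random vector with mean $(0,0)$ and covariance matrix $\Sigma=\begin{pmatrix}\sigma_x^2&\rho\sigma_x\sigma_y\\ \rho\sigma_x\sigma_y&\sigma_y^2\end{pmatrix}$. Player I (the minimizer) chooses $\mathbf a=(x_1,y_1)\in\mathbb R^2$ and Player II (the maximizer) chooses $\mathbf b=(x_2,y_2)\in\mathbb R^2$. Let $C_1(\mathbf a,\mathbf b)=\{(x,y):(x_1-x)^2+(y_1-y)^2<(x_2-x)^2+(y_2-y)^2\}$ and $C_2(\mathbf a,\mathbf b)=\{(x,y):(x_1-x)^2+(y_1-y)^2>(x_2-x)^2+(y_2-y)^2\}$. The payoff to Player II (paid by Player I) is $K(\mathbf a,\mathbf b)=x_1+y_1$ if $\mathbf a=\mathbf b$, and $K(\mathbf a,\mathbf b)=(x_1+y_1)\,P((\xi,\eta)\in C_1(\mathbf a,\mathbf b))+(x_2+y_2)\,P((\xi,\eta)\in C_2(\mathbf a,\mathbf b))$ if $\mathbf a\neq\mathbf b$. For $\mathbf a=(x,y)$ write $-\mathbf a=(-x,-y)$. Let $x_2^*=\frac{\sqrt{2\pi(\sigma_x^2+2\rho\sigma_x\sigma_y+\sigma_y^2)}}{4}$,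 $\mathbf b^*=(x_2^*,x_2^* )$ and $\mathbf a^*=(-x_2^*,-x_2^* )$. *)

From Stdlib Require Import Reals Lra ClassicalEpsilon.
Open Scope R_scope.

(* Total Riemann integral on [a,b]: RiemannInt if f is Riemann integrable
   there (value is independent of the integrability proof), 0 otherwise. *)
Definition RInt (f : R -> R) (a b : R) : R :=
  match excluded_middle_informative (exists pr : Riemann_integrable f a b, True) with
  | left H => RiemannInt (proj1_sig (constructive_indefinite_description _ H))
  | right _ => 0
  end.

(* Total limit of a real sequence (0 if it does not converge). *)
Definition seq_lim (u : nat -> R) : R :=
  match excluded_middle_informative (exists l, Un_cv u l) with
  | left H => proj1_sig (constructive_indefinite_description _ H)
  | right _ => 0
  end.

Definition ind (P : Prop) : R :=
  if excluded_middle_informative P then 1 else 0.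

(* Density of the centered bivariate normal with covariance
   [[sx^2, rho sx sy],[rho sx sy, sy^2]], |rho|<1, sx,sy>0. *)
Definition bvn_density (sx sy rho : R) (x y : R) : R :=
  / (2 * PI * sx * sy * sqrt (1 - rho ^ 2)) *
  exp (- / (2 * (1 - rho ^ 2)) *
       (x ^ 2 / sx ^ 2 - 2 * rho * x * y / (sx * sy) + y ^ 2 / sy ^ 2)).

(* P((xi,eta) in C) = integral of the density over C, as the limit of the
   iterated Riemann integrals over the squares [-n,n]^2. *)
Definition bvn_prob (sx sy rho : R) (C : R -> R -> Prop) : R :=
  seq_lim (fun n : nat =>
    RInt (fun x => RInt (fun y => bvn_density sx sy rho x y * ind (C x y))
                        (- INR n) (INR n))
         (- INR n) (INR n)).

Definition C1 (a b : R * R) (x y : R) : Prop :=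
  (fst a - x) ^ 2 + (snd a - y) ^ 2 < (fst b - x) ^ 2 + (snd b - y) ^ 2.
Definition C2 (a b : R * R) (x y : R) : Prop :=
  (fst a - x) ^ 2 + (snd a - y) ^ 2 > (fst b - x) ^ 2 + (snd b - y) ^ 2.

(* Payoff to Player II. *)
Definition K (sx sy rho : R) (a b : R * R) : R :=
  if excluded_middle_informative (a = b) then fst a + snd a
  else (fst a + snd a) * bvn_prob sx sy rho (C1 a b)
       + (fst b + snd b) * bvn_prob sx sy rho (C2 a b).

Definition x2star (sx sy rho : R) : R :=
  sqrt (2 * PI * (sx ^ 2 + 2 * rho * sx * sy + sy ^ 2)) / 4.
Definition bstar (sx sy rho : R) : R * R := (x2star sx sy rho, x2star sx sy rho).
Definition astar (sx sy rho : R) : R * R := (- x2star sx sy rho, - x2star sx sy rho).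

(* With [sx = sy = sg] the payoff is governed by half-plane probabilities. Conditioning on
   [xi = x], under which [eta] is normal with mean [rho x], turns [P (p xi + q eta > d)] into a
   Gaussian mixture [E (Q (al Z + be)) = Q (be / sqrt (1 + al^2))] of the standard normal tail
   [Q], whence [P (p xi + q eta > d) = Q (d / (sg sqrt (p^2 + 2 rho p q + q^2)))]; truncating to
   the squares [[-n, n]^2] only costs [O (1 / n)] by Gaussian tail bounds. Thus
   [K a b = s a + (s b - s a) Q z] with [s (x, y) = x + y], and both equilibrium inequalities
   reduce to [(w1 + w2) Q (...) <= 2 x2*] for a deviation [w]. As
   [x2* = kappa sg sqrt ((1 + rho) / 2)] with [kappa = sqrt (2 PI) / 2], this follows from the
   one-dimensional bound [v Q (v - kappa) <= kappa / 2], attained at [v = kappa]. *)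

From Pilot Require Import Defs.
From Stdlib Require Import Reals Lra Psatz ClassicalEpsilon Classical FunctionalExtensionality
  PropExtensionality.
From Coquelicot Require Import Coquelicot.
Open Scope R_scope.
Set Bullet Behavior "Strict Subproofs".

(* Equations between Coquelicot integrals are stated in the carrier of an abstract normed
   module; this exposes [R] so that [ring] and [lra] apply. *)
Ltac R_eq := match goal with |- @eq _ ?a ?b => change (@eq R a b) end.

Lemma continuous_of_ex_derive (f : R -> R) x : ex_derive f x -> continuous f x.
Proof. exact (@ex_derive_continuous R_AbsRing R_NormedModule f x). Qed.

Lemma continuous_of_continuity_pt (f : R -> R) x : continuity_pt f x -> continuous f x.
Proof. now rewrite continuity_pt_filterlim. Qed.

Lemma continuity_pt_of_ex_derive (f : R -> R) x : ex_derive f x -> continuity_pt f x.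
Proof. intro H. apply continuity_pt_filterlim, continuous_of_ex_derive, H. Qed.

Lemma ex_RInt_of_continuous (f : R -> R) a b : (forall x, continuous f x) -> ex_RInt f a b.
Proof. intro H. apply (@ex_RInt_continuous R_CompleteNormedModule). auto. Qed.

Lemma ex_RInt_of_continuity_pt (f : R -> R) a b : (forall x, continuity_pt f x) -> ex_RInt f a b.
Proof. intro H. apply ex_RInt_of_continuous. intro. apply continuous_of_continuity_pt, H. Qed.

Lemma MVT_R (f df : R -> R) a b : a <= b -> (forall x, is_derive f x (df x)) ->
  exists c, a <= c <= b /\ f b - f a = df c * (b - a).
Proof.
  intros Hab Hd. destruct (MVT_gen f a b df) as [c [Hc E]].
  - intros; apply Hd.
  - intros; apply continuity_pt_of_ex_derive; eexists; apply Hd.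
  - exists c. rewrite Rmin_left, Rmax_right in Hc; auto.
Qed.

Lemma exp_le_mono x y : x <= y -> exp x <= exp y.
Proof. intros [H|<-]; [left; apply exp_increasing, H | right; reflexivity]. Qed.

(* Coquelicot's integration lemmas at [R], in a form that [rewrite] can use. *)
Section RealIntegrals.

Variables (f g : R -> R).

Lemma RInt_scal_R a b k : ex_RInt f a b -> RInt (fun x => k * f x) a b = k * RInt f a b.
Proof. exact (@RInt_scal R_CompleteNormedModule f a b k). Qed.

Lemma RInt_comp_lin_R u v a b : ex_RInt f (u * a + v) (u * b + v) ->
  RInt (fun y => u * f (u * y + v)) a b = RInt f (u * a + v) (u * b + v).
Proof. exact (@RInt_comp_lin R_CompleteNormedModule f u v a b). Qed.

Lemma RInt_ext_R a b : (forall x, Rmin a b < x < Rmax a b -> f x = g x) -> RInt f a b = RInt g a b.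
Proof. exact (@RInt_ext R_CompleteNormedModule f g a b). Qed.

Lemma RInt_Chasles_R a b c : ex_RInt f a b -> ex_RInt f b c -> RInt f a b + RInt f b c = RInt f a c.
Proof. exact (@RInt_Chasles R_CompleteNormedModule f a b c). Qed.

Lemma RInt_minus_R a b : ex_RInt f a b -> ex_RInt g a b ->
  RInt (fun y => f y - g y) a b = RInt f a b - RInt g a b.
Proof. exact (@RInt_minus R_CompleteNormedModule f g a b). Qed.

Lemma RInt_swap_R a b : ex_RInt f a b -> RInt f b a = - RInt f a b.
Proof. intro H. rewrite <- (@opp_RInt_swap R_CompleteNormedModule f a b H). reflexivity. Qed.

Lemma is_RInt_unique_R a b l : is_RInt f a b l -> RInt f a b = l.
Proof. exact (@is_RInt_unique R_CompleteNormedModule f a b l). Qed.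

Lemma ex_RInt_scal_R a b k : ex_RInt f a b -> ex_RInt (fun y => k * f y) a b.
Proof. exact (@ex_RInt_scal R_NormedModule f a b k). Qed.

Lemma ex_RInt_minus_R a b : ex_RInt f a b -> ex_RInt g a b -> ex_RInt (fun y => f y - g y) a b.
Proof. exact (@ex_RInt_minus R_NormedModule f g a b). Qed.

Lemma ex_RInt_ext_R a b : (forall x, Rmin a b < x < Rmax a b -> f x = g x) ->
  ex_RInt f a b -> ex_RInt g a b.
Proof. exact (@ex_RInt_ext R_NormedModule f g a b). Qed.

Lemma ex_RInt_Chasles_R a b c : ex_RInt f a b -> ex_RInt f b c -> ex_RInt f a c.
Proof. exact (@ex_RInt_Chasles R_NormedModule f a b c). Qed.

Lemma ex_RInt_comp_lin_R u v a b : ex_RInt f (u * a + v) (u * b + v) ->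
  ex_RInt (fun y => u * f (u * y + v)) a b.
Proof. exact (@ex_RInt_comp_lin R_NormedModule f u v a b). Qed.

Lemma ex_RInt_swap_R a b : ex_RInt f a b -> ex_RInt f b a.
Proof. exact (@ex_RInt_swap R_NormedModule f a b). Qed.

End RealIntegrals.

Lemma RInt_const_R k a b : RInt (fun _ => k) a b = k * (b - a).
Proof. rewrite (@RInt_const R_CompleteNormedModule). unfold scal; simpl; unfold mult; simpl. ring. Qed.

(** * The Gaussian integral *)

Definition gauss (t : R) : R := exp (- (t * t) / 2).
Definition gauss_int (x : R) : R := RInt gauss 0 x.
Definition gauss_kernel (x t : R) : R := exp (- (x * x) * (1 + t * t) / 2) / (1 + t * t).
Definition gauss_aux (x : R) : R := RInt (gauss_kernel x) 0 1.

Lemma gauss_pos t : 0 < gauss t.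
Proof. apply exp_pos. Qed.

Lemma gauss_opp t : gauss (- t) = gauss t.
Proof. unfold gauss. now replace (- t * - t) with (t * t) by ring. Qed.

Lemma gauss_continuous t : continuous gauss t.
Proof. apply continuous_of_ex_derive. unfold gauss. auto_derive. auto. Qed.

Lemma ex_RInt_gauss a b : ex_RInt gauss a b.
Proof. apply ex_RInt_of_continuous, gauss_continuous. Qed.

Lemma RInt_gauss a b : RInt gauss a b = gauss_int b - gauss_int a.
Proof.
  unfold gauss_int. rewrite <- (RInt_Chasles_R gauss a 0 b) by apply ex_RInt_gauss.
  rewrite (RInt_swap_R gauss 0 a) by apply ex_RInt_gauss. R_eq; ring.
Qed.

Lemma gauss_int_deriv x : is_derive gauss_int x (gauss x).
Proof.
  apply is_derive_RInt with (a := 0); [|apply gauss_continuous].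
  apply filter_forall; intros; apply (@RInt_correct R_CompleteNormedModule), ex_RInt_gauss.
Qed.

Lemma gauss_int_opp x : gauss_int (- x) = - gauss_int x.
Proof.
  unfold gauss_int.
  assert (H := RInt_comp_lin_R gauss (-1) 0 0 x (ex_RInt_gauss _ _)).
  replace (-1 * 0 + 0) with 0 in H by ring. replace (-1 * x + 0) with (- x) in H by ring.
  rewrite <- H, (RInt_ext_R _ (fun y => -1 * gauss y)).
  - rewrite RInt_scal_R by apply ex_RInt_gauss. ring.
  - intros y _. now replace (-1 * y + 0) with (- y) by ring; rewrite gauss_opp.
Qed.

Lemma gauss_int_nonneg x : 0 <= x -> 0 <= gauss_int x.
Proof.
  intros. apply RInt_ge_0; auto; [apply ex_RInt_gauss|]. intros; left; apply gauss_pos.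
Qed.

Lemma gauss_kernel_continuous x t : continuous (gauss_kernel x) t.
Proof. apply continuous_of_ex_derive. unfold gauss_kernel. auto_derive. nra. Qed.

Lemma ex_RInt_gauss_kernel x a b : ex_RInt (gauss_kernel x) a b.
Proof. apply ex_RInt_of_continuous, gauss_kernel_continuous. Qed.

Lemma gauss_kernel_deriv x t :
  is_derive (fun z => gauss_kernel z t) x (- x * exp (- (x * x) * (1 + t * t) / 2)).
Proof. unfold gauss_kernel. auto_derive; [nra|]. unfold Rdiv. field. nra. Qed.

Lemma gauss_kernel_deriv_continuous x t :
  continuity_2d_pt (fun u v => - u * exp (- (u * u) * (1 + v * v) / 2)) x t.
Proof.
  apply continuity_2d_pt_mult.
  - apply continuity_2d_pt_opp, continuity_2d_pt_id1.
  - apply continuity_1d_2d_pt_comp with (f := exp);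
      [apply derivable_continuous_pt, derivable_pt_exp|].
    repeat first [ apply continuity_2d_pt_mult | apply continuity_2d_pt_plus
                 | apply continuity_2d_pt_opp | apply continuity_2d_pt_id1
                 | apply continuity_2d_pt_id2 | apply continuity_2d_pt_const ].
Qed.

(* Differentiation under the integral sign, then the substitution [u = x t]. *)
Lemma gauss_aux_deriv x : is_derive gauss_aux x (- gauss x * gauss_int x).
Proof.
  assert (E : forall u t,
             Derive (fun z => gauss_kernel z t) u = - u * exp (- (u * u) * (1 + t * t) / 2)).
  { intros; apply is_derive_unique, gauss_kernel_deriv. }
  replace (- gauss x * gauss_int x) with (RInt (fun t => Derive (fun u => gauss_kernel u t) x) 0 1).
  - apply (is_derive_RInt_param gauss_kernel 0 1 x).
    + apply filter_forall; intros; eexists; apply gauss_kernel_deriv.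
    + intros t _. eapply continuity_2d_pt_ext; [|apply (gauss_kernel_deriv_continuous x t)].
      intros; simpl; now rewrite E.
    + apply filter_forall; intros; apply ex_RInt_gauss_kernel.
  - rewrite (RInt_ext_R _ (fun t => (- gauss x) * (x * gauss (x * t + 0)))).
    + rewrite RInt_scal_R, RInt_comp_lin_R; rewrite ?Rmult_0_r, ?Rplus_0_r, ?Rmult_1_r;
        try apply ex_RInt_gauss; [reflexivity|].
      apply ex_RInt_of_continuous; intros; apply continuous_of_ex_derive.
      unfold gauss; auto_derive; auto.
    + intros t _. rewrite E. unfold gauss. rewrite Rplus_0_r.
      replace (- (x * x) * (1 + t * t) / 2) with (- (x * x) / 2 + - (x * t * (x * t)) / 2) by field.
      rewrite exp_plus. ring.
Qed.

Lemma gauss_aux_0 : gauss_aux 0 = PI / 4.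
Proof.
  unfold gauss_aux. rewrite (RInt_ext_R _ (fun t => / (1 + t * t))).
  - apply is_RInt_unique_R.
    replace (PI / 4) with (atan 1 - atan 0) by (rewrite atan_1, atan_0; ring).
    apply (@is_RInt_derive R_CompleteNormedModule atan).
    + intros. apply is_derive_atan.
    + intros. apply continuous_of_ex_derive. auto_derive. nra.
  - intros. unfold gauss_kernel. replace (- (0 * 0) * (1 + x * x) / 2) with 0 by field.
    rewrite exp_0. field. nra.
Qed.

(* The classical trick: [gauss_int x ^ 2 + 2 gauss_aux x] has derivative 0, and equals
   [PI / 2] at [x = 0]. *)
Lemma gauss_int_sqr x : gauss_int x * gauss_int x = PI / 2 - 2 * gauss_aux x.
Proof.
  set (F x := gauss_int x * gauss_int x + 2 * gauss_aux x).
  assert (HF : forall x, is_derive F x 0).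
  { intro y. replace 0 with (gauss y * gauss_int y + gauss_int y * gauss y
                             + 2 * (- gauss y * gauss_int y)) by ring.
    apply (@is_derive_plus R_AbsRing R_NormedModule).
    - apply (is_derive_mult (K := R_AbsRing)); [apply gauss_int_deriv.. | intros; apply Rmult_comm].
    - apply is_derive_scal, gauss_aux_deriv. }
  assert (F0 : F 0 = PI / 2).
  { unfold F, gauss_int. rewrite gauss_aux_0, RInt_point. unfold zero; simpl. field. }
  destruct (Rle_dec 0 x) as [Hx|Hx];
    [destruct (MVT_R F (fun _ => 0) 0 x Hx HF) as [c [_ Hc]]
    |destruct (MVT_R F (fun _ => 0) x 0 ltac:(lra) HF) as [c [_ Hc]]];
    unfold F in *; lra.
Qed.

Lemma gauss_aux_bounds x : 0 <= gauss_aux x <= gauss x.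
Proof.
  assert (Hk : forall t, 0 <= t <= 1 -> 0 <= gauss_kernel x t <= gauss x).
  { intros t Ht. unfold gauss_kernel, gauss.
    assert (exp (- (x * x) * (1 + t * t) / 2) <= exp (- (x * x) / 2)).
    { apply exp_le_mono. assert (0 <= x * x * (t * t)) by nra. lra. }
    assert (0 < exp (- (x * x) * (1 + t * t) / 2)) by apply exp_pos.
    assert (/ (1 + t * t) <= 1) by (rewrite <- Rinv_1; apply Rinv_le_contravar; nra).
    assert (0 < / (1 + t * t)) by (apply Rinv_0_lt_compat; nra).
    unfold Rdiv. split; nra. }
  unfold gauss_aux. split.
  - apply RInt_ge_0; [lra | apply ex_RInt_gauss_kernel |]. intros; apply Hk; lra.
  - replace (gauss x) with (RInt (fun _ => gauss x) 0 1) by (rewrite RInt_const_R; R_eq; ring).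
    apply RInt_le; [lra | apply ex_RInt_gauss_kernel | |].
    + apply ex_RInt_of_continuous; intros; apply continuous_const.
    + intros; apply Hk; lra.
Qed.

(** * The standard normal distribution *)

Definition sqrt2pi : R := sqrt (2 * PI).

Lemma PI_gt_3 : 3 < PI.
Proof. generalize PI2_3_2; lra. Qed.

Lemma sqrt2pi_pos : 0 < sqrt2pi.
Proof. apply sqrt_lt_R0. generalize PI_RGT_0; lra. Qed.

Lemma sqrt2pi_sqr : sqrt2pi * sqrt2pi = 2 * PI.
Proof. apply sqrt_sqrt. generalize PI_RGT_0; lra. Qed.

Definition phi (t : R) : R := gauss t / sqrt2pi.
(* [Q z] is [P (Z > z)] for a standard normal [Z]. *)
Definition Q (z : R) : R := / 2 - gauss_int z / sqrt2pi.

Lemma phi_pos t : 0 < phi t.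
Proof. apply Rdiv_lt_0_compat; [apply gauss_pos | apply sqrt2pi_pos]. Qed.

Lemma phi_0 : phi 0 = / sqrt2pi.
Proof.
  unfold phi, gauss. replace (- (0 * 0) / 2) with 0 by field. rewrite exp_0.
  field. apply Rgt_not_eq, sqrt2pi_pos.
Qed.

Lemma phi_deriv t : is_derive phi t (- t * phi t).
Proof.
  generalize sqrt2pi_pos; intro. unfold phi, gauss. auto_derive; [lra|]. unfold Rdiv. field. lra.
Qed.

Lemma Q_deriv z : is_derive Q z (- phi z).
Proof.
  assert (H := Rgt_not_eq _ _ sqrt2pi_pos).
  apply (is_derive_ext (fun z => / 2 + (- / sqrt2pi) * gauss_int z));
    [intros; unfold Q; R_eq; field; auto|].
  replace (- phi z) with (0 + (- / sqrt2pi) * gauss z) by (unfold phi; field; auto).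
  apply (@is_derive_plus R_AbsRing R_NormedModule).
  - apply (@is_derive_const R_AbsRing R_NormedModule).
  - apply is_derive_scal, gauss_int_deriv.
Qed.

Lemma phi_continuity_pt t : continuity_pt phi t.
Proof. apply continuity_pt_of_ex_derive. eexists; apply phi_deriv. Qed.

Lemma Q_continuity_pt t : continuity_pt Q t.
Proof. apply continuity_pt_of_ex_derive. eexists; apply Q_deriv. Qed.

Lemma ex_RInt_phi a b : ex_RInt phi a b.
Proof. apply ex_RInt_of_continuity_pt, phi_continuity_pt. Qed.

Lemma RInt_phi a b : RInt phi a b = Q a - Q b.
Proof.
  unfold phi, Q. rewrite (RInt_ext_R _ (fun x => / sqrt2pi * gauss x)).
  - rewrite RInt_scal_R, RInt_gauss by apply ex_RInt_gauss. R_eq. unfold Rdiv. ring.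
  - intros; unfold Rdiv; ring.
Qed.

Lemma Q_opp z : Q (- z) = 1 - Q z.
Proof. unfold Q. rewrite gauss_int_opp. field. apply Rgt_not_eq, sqrt2pi_pos. Qed.

Lemma Q_0 : Q 0 = / 2.
Proof. unfold Q, gauss_int. rewrite RInt_point. unfold zero; simpl. unfold Rdiv. ring. Qed.

Lemma Q_antitone a b : a <= b -> Q b <= Q a.
Proof.
  intros Hab. assert (0 <= RInt phi a b).
  { apply RInt_ge_0; auto; [apply ex_RInt_phi|]. intros; left; apply phi_pos. }
  rewrite RInt_phi in H. lra.
Qed.

(* From [gauss_int_sqr]: [(sqrt (PI/2) - J) (sqrt (PI/2) + J) = 2 gauss_aux <= 2 gauss]
   with [J = gauss_int z], and [sqrt (PI/2) + J >= sqrt (PI/2)] for [z >= 0]. *)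
Lemma Q_le_gauss z : 0 <= z -> 0 <= Q z <= 2 / PI * gauss z.
Proof.
  intros Hz.
  assert (HJ := gauss_int_sqr z). assert (HB := gauss_aux_bounds z).
  assert (J0 := gauss_int_nonneg z Hz). assert (Hpi := PI_RGT_0).
  set (s := sqrt (PI / 2)).
  assert (Hs : s * s = PI / 2) by (apply sqrt_sqrt; lra).
  assert (Hs0 : 0 < s) by (apply sqrt_lt_R0; lra).
  assert (Hq : sqrt2pi = 2 * s).
  { unfold sqrt2pi, s. replace (2 * PI) with ((2 * 2) * (PI / 2)) by field.
    rewrite sqrt_mult, sqrt_square; lra. }
  assert (HQ : Q z = (s - gauss_int z) / (2 * s)) by (unfold Q; rewrite Hq; field; lra).
  assert (gauss_int z <= s) by nra.
  assert (s - gauss_int z <= 2 * gauss z / s).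
  { apply Rmult_le_reg_r with s; auto. unfold Rdiv. rewrite Rmult_assoc, Rinv_l; nra. }
  rewrite HQ. split.
  - apply Rdiv_le_0_compat; lra.
  - apply Rle_trans with (2 * gauss z / s / (2 * s)).
    + unfold Rdiv. apply Rmult_le_compat_r; [left; apply Rinv_0_lt_compat|]; lra.
    + right. replace PI with (2 * (s * s)) by lra. field. lra.
Qed.

Lemma Q_nonneg z : 0 <= Q z.
Proof.
  destruct (Rle_dec 0 z) as [Hz|Hz]; [apply Q_le_gauss; auto|].
  rewrite <- (Ropp_involutive z), Q_opp.
  destruct (Q_le_gauss (- z)) as [_ H]; [lra|].
  assert (gauss (- z) <= 1) by (rewrite <- exp_0; apply exp_le_mono; nra).
  assert (2 / PI <= 1) by (generalize PI_gt_3; intro; apply Rmult_le_reg_r with PI;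
                          [lra | unfold Rdiv; rewrite Rmult_assoc, Rinv_l; lra]).
  assert (0 <= 2 / PI) by (apply Rdiv_le_0_compat; generalize PI_RGT_0; lra).
  assert (0 < gauss (- z)) by apply gauss_pos.
  nra.
Qed.

Lemma Q_le_1 z : Q z <= 1.
Proof. rewrite <- (Ropp_involutive z), Q_opp. generalize (Q_nonneg (- z)). lra. Qed.

(* With [Q_le_gauss], since [2 z <= PI (1 + z^2 / 2) <= PI exp (z^2 / 2)]. *)
Lemma Q_le_inv z : 0 < z -> Q z <= / z.
Proof.
  intros Hz. destruct (Q_le_gauss z) as [_ H]; [lra|].
  assert (E : 1 + z * z / 2 <= exp (z * z / 2)) by apply exp_ineq1_le.
  assert (E2 : gauss z * exp (z * z / 2) = 1).
  { unfold gauss. rewrite <- exp_plus.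
    replace (- (z * z) / 2 + z * z / 2) with 0 by field. apply exp_0. }
  assert (Hpi := PI_gt_3). assert (Hg := gauss_pos z).
  assert (gauss z * (1 + z * z / 2) <= 1) by nra.
  apply Rle_trans with (2 / PI * gauss z); auto.
  apply Rmult_le_reg_r with (PI * z); [nra|].
  replace (2 / PI * gauss z * (PI * z)) with (2 * z * gauss z) by (field; lra).
  replace (/ z * (PI * z)) with PI by (field; lra).
  nra.
Qed.

(** * Maximising [v Q (v - kappa)] *)

Definition kappa : R := sqrt2pi / 2.

Lemma kappa_gt_1 : 1 < kappa.
Proof.
  unfold kappa. assert (2 < sqrt2pi); [|lra].
  generalize sqrt2pi_sqr sqrt2pi_pos PI_gt_3; intros; nra.
Qed.

(* Minus the derivative of [v |-> v Q (v - kappa)] at [v = y + kappa]. *)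
Definition tail_slack (y : R) : R := (y + kappa) * phi y - Q y.

Lemma tail_slack_deriv y : is_derive tail_slack y (phi y * (2 - y * y - kappa * y)).
Proof.
  apply (is_derive_ext (fun y => (y + kappa) * phi y + (-1) * Q y));
    [intros; unfold tail_slack; R_eq; ring|].
  replace (phi y * (2 - y * y - kappa * y))
    with ((1 * phi y + (y + kappa) * (- y * phi y)) + (-1) * (- phi y)) by ring.
  apply (@is_derive_plus R_AbsRing R_NormedModule).
  - apply (is_derive_mult (K := R_AbsRing) (fun y => y + kappa) phi);
      [| apply phi_deriv | intros; apply Rmult_comm].
    auto_derive; auto; ring.
  - apply is_derive_scal, Q_deriv.
Qed.

Lemma tail_slack_0 : tail_slack 0 = 0.
Proof.
  unfold tail_slack, kappa. rewrite phi_0, Q_0. field. generalize sqrt2pi_pos; lra.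
Qed.

(* On [[1, +oo)] the slack decreases, yet it is at least [- Q Y >= - 1 / Y]. *)
Lemma tail_slack_nonneg_ge_1 y : 1 <= y -> 0 <= tail_slack y.
Proof.
  intros Hy. destruct (Rle_dec 0 (tail_slack y)) as [|Hn]; auto. exfalso.
  apply Rnot_le_lt in Hn.
  set (Y := Rmax y (2 / (- tail_slack y))).
  assert (HY1 : y <= Y) by apply Rmax_l.
  assert (HY2 : 2 / (- tail_slack y) <= Y) by apply Rmax_r.
  assert (HY : 0 < Y) by lra.
  assert (Hk := kappa_gt_1).
  destruct (MVT_R tail_slack _ y Y HY1 tail_slack_deriv) as [c [Hc E]].
  assert (phi c * (2 - c * c - kappa * c) <= 0)
    by (assert (H := phi_pos c); assert (2 - c * c - kappa * c <= 0) by nra; nra).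
  assert (tail_slack Y >= - / Y).
  { unfold tail_slack. generalize (Q_le_inv Y HY) (phi_pos Y); intros. nra. }
  assert (Y * (- tail_slack y) >= 2).
  { apply (Rmult_le_compat_r (- tail_slack y)) in HY2; [|lra].
    unfold Rdiv in HY2. rewrite Rmult_assoc, Rinv_l in HY2; lra. }
  assert (/ Y * Y = 1) by (field; lra).
  assert (0 < / Y) by (apply Rinv_0_lt_compat; lra).
  nra.
Qed.

(* On [[0, 1]] the slack first increases, then decreases, and it is nonnegative at both ends. *)
Lemma tail_slack_nonneg y : 0 <= y -> 0 <= tail_slack y.
Proof.
  intros Hy. destruct (Rle_dec 1 y) as [H1|H1]; [apply tail_slack_nonneg_ge_1; auto|].
  assert (Hk := kappa_gt_1).
  destruct (Rle_dec (y * y + kappa * y) 2) as [H2|H2].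
  - destruct (MVT_R tail_slack _ 0 y Hy tail_slack_deriv) as [c [Hc E]].
    rewrite tail_slack_0 in E. assert (H := phi_pos c).
    assert (c * c <= y * y) by nra. assert (kappa * c <= kappa * y) by nra.
    assert (0 <= phi c * (2 - c * c - kappa * c)) by (apply Rmult_le_pos; lra). nra.
  - destruct (MVT_R tail_slack _ y 1 ltac:(lra) tail_slack_deriv) as [c [Hc E]].
    assert (H := phi_pos c). assert (H3 := tail_slack_nonneg_ge_1 1 ltac:(lra)).
    assert (c * c >= y * y) by nra. assert (kappa * c >= kappa * y) by nra.
    assert (phi c * (2 - c * c - kappa * c) <= 0) by (apply Rmult_le_0_l; lra). nra.
Qed.

Lemma tail_slack_nonpos y : - kappa <= y <= 0 -> tail_slack y <= 0.
Proof.
  intros Hy.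
  destruct (MVT_R tail_slack _ y 0 ltac:(lra) tail_slack_deriv) as [c [Hc E]].
  rewrite tail_slack_0 in E. assert (H := phi_pos c).
  assert (0 <= (- c) * (c + kappa)) by (apply Rmult_le_pos; lra).
  assert (0 <= phi c * (2 - c * c - kappa * c)) by (apply Rmult_le_pos; lra). nra.
Qed.

Lemma mul_Q_shift_le v : v * Q (v - kappa) <= kappa / 2.
Proof.
  set (f v := v * Q (v - kappa)).
  assert (Hd : forall v, is_derive f v (- tail_slack (v - kappa))).
  { intro w. unfold f, tail_slack.
    replace (- ((w - kappa + kappa) * phi (w - kappa) - Q (w - kappa)))
      with (1 * Q (w - kappa) + w * (1 * - phi (w - kappa))) by ring.
    apply (is_derive_mult (K := R_AbsRing) (fun v => v) (fun v => Q (v - kappa)));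
      [apply (@is_derive_id R_AbsRing) | | intros; apply Rmult_comm].
    apply (is_derive_comp Q (fun v => v - kappa)); [apply Q_deriv|].
    auto_derive; auto. }
  assert (Hk := kappa_gt_1).
  assert (Hfk : f kappa = kappa / 2) by (unfold f; rewrite Rminus_diag, Q_0; field).
  change (f v <= kappa / 2).
  destruct (Rle_dec 0 v) as [H0|H0]; [destruct (Rle_dec kappa v) as [H1|H1]|].
  - destruct (MVT_R f _ kappa v H1 Hd) as [c [Hc E]].
    assert (0 <= tail_slack (c - kappa)) by (apply tail_slack_nonneg; lra). nra.
  - destruct (MVT_R f _ v kappa ltac:(lra) Hd) as [c [Hc E]].
    assert (tail_slack (c - kappa) <= 0) by (apply tail_slack_nonpos; lra). nra.
  - unfold f. assert (H := Q_nonneg (v - kappa)). nra.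
Qed.

(** * The deviation inequality *)

(* With [D^2 = (1 - rho) N + rho u^2] and [N >= u^2 / 2], the ratio [(N/2 - c u) / D]
   is smallest at [N = u^2 / 2], where [D = u t]. *)
Lemma deviation_ratio_ineq rho c u N D t : 0 < rho < 1 -> 0 < c -> 0 < u -> u * u / 2 <= N ->
  D * D = (1 - rho) * N + rho * (u * u) -> 0 <= D -> 0 < t -> t * t = (1 + rho) / 2 ->
  (u * u / 4 - c * u) * D <= (N / 2 - c * u) * (u * t).
Proof.
  intros Hr Hc Hu HN HD HD0 Ht Ht2.
  set (D0 := u * t). set (m0 := u * u / 4 - c * u). set (m := N / 2 - c * u).
  assert (HD0pos : 0 < D0) by (unfold D0; nra).
  assert (HD0sq : D0 * D0 = u * u * ((1 + rho) / 2)) by (unfold D0; rewrite <- Ht2; ring).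
  assert (HDD : D0 <= D) by nra.
  assert (Hmm : m0 <= m) by (unfold m, m0; lra).
  destruct (Rle_dec m0 0) as [H0|H0]; [nra|].
  set (Dl := N - u * u / 2).
  assert (Em : m = m0 + Dl / 2) by (unfold m, m0, Dl; lra).
  assert (ES : D * D = D0 * D0 + (1 - rho) * Dl) by (unfold Dl; rewrite HD, HD0sq; field).
  assert (Hpos : 0 < D0 * D0 - (1 - rho) * m0).
  { rewrite HD0sq. unfold m0. assert (0 < (1 - rho) * (c * u)) by (apply Rmult_lt_0_compat; nra).
    nra. }
  assert (Hsq : (m0 * D) * (m0 * D) <= (m * D0) * (m * D0)).
  { enough (0 <= (m * D0) * (m * D0) - (m0 * D) * (m0 * D)) by lra.
    replace ((m * D0) * (m * D0) - (m0 * D) * (m0 * D))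
      with (Dl * (m0 * (D0 * D0 - (1 - rho) * m0) + Dl * (D0 * D0) / 4))
      by (replace (m0 * D * (m0 * D)) with (m0 * m0 * (D * D)) by ring; rewrite ES, Em; field).
    apply Rmult_le_pos; [unfold Dl; lra|].
    assert (0 < m0 * (D0 * D0 - (1 - rho) * m0)) by (apply Rmult_lt_0_compat; lra).
    assert (0 <= Dl * (D0 * D0) / 4) by (unfold Dl; apply Rmult_le_pos; [apply Rmult_le_pos; nra|lra]).
    lra. }
  assert (0 <= m0 * D) by nra. assert (0 <= m * D0) by nra.
  fold m0 m D0. nra.
Qed.

Lemma x2star_eq sg rho : 0 < sg -> -1 < rho ->
  x2star sg sg rho = kappa * (sg * sqrt ((1 + rho) / 2)).
Proof.
  intros Hs Hr. unfold x2star, kappa, sqrt2pi. assert (Hpi := PI_gt_3).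
  replace (2 * PI * (sg ^ 2 + 2 * rho * sg * sg + sg ^ 2))
    with ((2 * PI) * ((2 * sg) * (2 * sg) * ((1 + rho) / 2))) by (simpl; field).
  rewrite sqrt_mult, (sqrt_mult ((2 * sg) * (2 * sg))), sqrt_square; nra.
Qed.

Lemma x2star_pos sg rho : 0 < sg -> -1 < rho -> 0 < x2star sg sg rho.
Proof.
  intros. rewrite x2star_eq by auto. generalize kappa_gt_1; intro.
  assert (0 < sqrt ((1 + rho) / 2)) by (apply sqrt_lt_R0; lra).
  apply Rmult_lt_0_compat; [lra | apply Rmult_lt_0_compat; lra].
Qed.

Definition quad_form (rho w1 w2 : R) : R := w1 * w1 + 2 * rho * w1 * w2 + w2 * w2.

Lemma quad_form_pos rho w1 w2 : -1 < rho < 1 -> (w1 <> 0 \/ w2 <> 0) -> 0 < quad_form rho w1 w2.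
Proof.
  intros Hr Hw. unfold quad_form.
  replace (w1 * w1 + 2 * rho * w1 * w2 + w2 * w2)
    with ((w1 + rho * w2) * (w1 + rho * w2) + (1 - rho * rho) * (w2 * w2)) by ring.
  destruct (Req_dec w2 0) as [->|H2].
  - destruct Hw as [H1|]; [|contradiction]. generalize (Rsqr_pos_lt _ H1). unfold Rsqr. nra.
  - generalize (Rsqr_pos_lt _ H2) (Rle_0_sqr (w1 + rho * w2)). unfold Rsqr.
    assert (0 < 1 - rho * rho) by nra. nra.
Qed.

(* With [u = w1 + w2], [t = sqrt ((1 + rho) / 2)], [c = x2star = kappa sg t] and
   [v = u / (4 sg t)]: [u Q (...) <= u Q (v - kappa) = 4 sg t (v Q (v - kappa)) <= 2 c]. *)
Lemma deviation_gain_le sg rho w1 w2 : 0 < sg -> 0 < rho < 1 -> (w1 <> 0 \/ w2 <> 0) ->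
  (w1 + w2) * Q (((w1 * w1 + w2 * w2) / 2 - x2star sg sg rho * (w1 + w2)) /
                 (sg * sqrt (quad_form rho w1 w2))) <= 2 * x2star sg sg rho.
Proof.
  intros Hs Hr Hw.
  set (t := sqrt ((1 + rho) / 2)).
  assert (Ht : 0 < t) by (apply sqrt_lt_R0; lra).
  assert (Ht2 : t * t = (1 + rho) / 2) by (apply sqrt_sqrt; lra).
  set (u := w1 + w2). set (N := w1 * w1 + w2 * w2). set (c := x2star sg sg rho).
  assert (Hc : c = kappa * (sg * t)) by (apply x2star_eq; lra).
  assert (Hk := kappa_gt_1).
  assert (Hcpos : 0 < c) by (apply x2star_pos; lra).
  destruct (Rle_dec u 0) as [Hu|Hu].
  { generalize (Q_nonneg ((N / 2 - c * u) / (sg * sqrt (quad_form rho w1 w2)))). nra. }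
  apply Rnot_le_lt in Hu.
  assert (HN : u * u / 2 <= N) by (unfold u, N; generalize (Rle_0_sqr (w1 - w2)); unfold Rsqr; lra).
  assert (HS := quad_form_pos rho w1 w2 ltac:(lra) Hw).
  set (D := sqrt (quad_form rho w1 w2)).
  assert (HD : D * D = (1 - rho) * N + rho * (u * u))
    by (unfold D; rewrite sqrt_sqrt by lra; unfold quad_form, N, u; ring).
  assert (HDpos : 0 < D) by (apply sqrt_lt_R0; lra).
  assert (Hcore := deviation_ratio_ineq rho c u N D t Hr Hcpos Hu HN HD ltac:(lra) Ht Ht2).
  set (v := u / (4 * (sg * t))).
  assert (Hz : v - kappa <= (N / 2 - c * u) / (sg * D)).
  { unfold v. rewrite Hc in Hcore |- *.
    apply Rmult_le_reg_r with (4 * (sg * sg * t * D)); [repeat apply Rmult_lt_0_compat; lra|].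
    replace ((u / (4 * (sg * t)) - kappa) * (4 * (sg * sg * t * D)))
      with (4 * sg / u * ((u * u / 4 - kappa * (sg * t) * u) * D)) by (field; lra).
    replace ((N / 2 - kappa * (sg * t) * u) / (sg * D) * (4 * (sg * sg * t * D)))
      with (4 * sg / u * ((N / 2 - kappa * (sg * t) * u) * (u * t))) by (field; lra).
    apply Rmult_le_compat_l; [apply Rdiv_le_0_compat|]; lra. }
  apply Rle_trans with (u * Q (v - kappa)); [apply Rmult_le_compat_l; [lra | apply Q_antitone, Hz]|].
  replace (u * Q (v - kappa)) with (4 * (sg * t) * (v * Q (v - kappa))) by (unfold v; field; lra).
  generalize (mul_Q_shift_le v); intro. rewrite Hc. nra.
Qed.

(** * The probability model *)

Lemma seq_lim_eq u l : Un_cv u l -> seq_lim u = l.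
Proof.
  intros H. unfold seq_lim. destruct excluded_middle_informative as [e|n].
  - destruct constructive_indefinite_description as [l' H']. simpl. eapply UL_sequence; eauto.
  - exfalso; apply n; eauto.
Qed.

Definition bvn_trunc (sx sy rho : R) (C : R -> R -> Prop) (n : nat) : R :=
  Defs.RInt (fun x => Defs.RInt (fun y => bvn_density sx sy rho x y * Defs.ind (C x y))
                                (- INR n) (INR n)) (- INR n) (INR n).

Lemma bvn_prob_eq sx sy rho C l : Un_cv (bvn_trunc sx sy rho C) l -> bvn_prob sx sy rho C = l.
Proof. apply seq_lim_eq. Qed.

Lemma Un_cv_of_rate (u : nat -> R) l C M :
  (forall n, M < INR n -> Rabs (u n - l) <= C / INR n) -> Un_cv u l.
Proof.
  intros H eps Heps.
  destruct (INR_archimed 1 (Rmax (Rmax M 0) (Rabs C / eps)) Rlt_0_1) as [N HN].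
  rewrite Rmult_1_r in HN. exists N. intros n Hn. apply le_INR in Hn.
  generalize (Rmax_l (Rmax M 0) (Rabs C / eps)) (Rmax_r (Rmax M 0) (Rabs C / eps))
    (Rmax_l M 0) (Rmax_r M 0); intros.
  assert (Hn0 : 0 < INR n) by lra.
  apply Rle_lt_trans with (C / INR n); [apply H; lra|].
  apply Rle_lt_trans with (Rabs C / INR n);
    [apply Rmult_le_compat_r; [left; apply Rinv_0_lt_compat; auto | apply Rle_abs]|].
  apply Rmult_lt_reg_r with (INR n); auto. unfold Rdiv. rewrite Rmult_assoc, Rinv_l by lra.
  assert (Rabs C / eps * eps = Rabs C) by (field; lra). nra.
Qed.

Lemma Defs_RInt_eq f a b : ex_RInt f a b -> Defs.RInt f a b = RInt f a b.
Proof.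
  intros H. unfold Defs.RInt. destruct excluded_middle_informative as [e|n].
  - symmetry. apply RInt_Reals.
  - exfalso; apply n. exists (ex_RInt_Reals_0 _ _ _ H). auto.
Qed.

Lemma Defs_RInt_not f a b : ~ ex_RInt f a b -> Defs.RInt f a b = 0.
Proof.
  intros H. unfold Defs.RInt. destruct excluded_middle_informative as [e|]; auto.
  exfalso. destruct e as [pr _]. apply H, ex_RInt_Reals_1, pr.
Qed.

Lemma ex_RInt_comp_opp (g : R -> R) T : ex_RInt g (- T) T -> ex_RInt (fun y => g (- y)) (- T) T.
Proof.
  intros H. apply (ex_RInt_ext_R (fun y => -1 * (-1 * g (-1 * y + 0)))).
  - intros. replace (-1 * x + 0) with (- x) by ring. ring.
  - apply ex_RInt_scal_R, (ex_RInt_comp_lin_R g (-1) 0 (- T) T).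
    replace (-1 * - T + 0) with T by ring. replace (-1 * T + 0) with (- T) by ring.
    apply ex_RInt_swap_R. auto.
Qed.

Lemma Defs_RInt_comp_opp (g : R -> R) T : Defs.RInt (fun y => g (- y)) (- T) T = Defs.RInt g (- T) T.
Proof.
  destruct (classic (ex_RInt g (- T) T)) as [H|H].
  - rewrite !Defs_RInt_eq; auto; [| apply ex_RInt_comp_opp; auto].
    assert (H' : ex_RInt g (-1 * - T + 0) (-1 * T + 0)).
    { replace (-1 * - T + 0) with T by ring. replace (-1 * T + 0) with (- T) by ring.
      apply ex_RInt_swap_R. auto. }
    rewrite (RInt_ext_R _ (fun y => -1 * (-1 * g (-1 * y + 0)))).
    + rewrite RInt_scal_R, RInt_comp_lin_R by (try apply ex_RInt_comp_lin_R; auto).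
      replace (-1 * - T + 0) with T by ring. replace (-1 * T + 0) with (- T) by ring.
      rewrite RInt_swap_R; auto. R_eq; ring.
    + intros. replace (-1 * x + 0) with (- x) by ring. ring.
  - rewrite !Defs_RInt_not; auto. intros H'. apply H. apply ex_RInt_comp_opp in H'.
    eapply ex_RInt_ext_R; [|exact H']. intros. simpl. rewrite Ropp_involutive. auto.
Qed.

Lemma ind_iff (P P' : Prop) : (P <-> P') -> Defs.ind P = Defs.ind P'.
Proof. intros H. apply propositional_extensionality in H. now rewrite H. Qed.

Lemma ind_1 (P : Prop) : P -> Defs.ind P = 1.
Proof. intros. unfold Defs.ind. destruct excluded_middle_informative; tauto. Qed.

Lemma ind_0 (P : Prop) : ~ P -> Defs.ind P = 0.
Proof. intros. unfold Defs.ind. destruct excluded_middle_informative; tauto. Qed.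

Lemma bvn_prob_ext sx sy rho (C C' : R -> R -> Prop) : (forall x y, C x y <-> C' x y) ->
  bvn_prob sx sy rho C = bvn_prob sx sy rho C'.
Proof.
  intros H. replace C' with C; auto.
  do 2 (apply functional_extensionality; intro). apply propositional_extensionality; auto.
Qed.

Lemma bvn_density_flip_y sx sy rho x y : bvn_density sx sy (- rho) x y = bvn_density sx sy rho x (- y).
Proof.
  unfold bvn_density. replace ((- rho) ^ 2) with (rho ^ 2) by ring.
  do 3 f_equal. unfold Rdiv. ring.
Qed.

Lemma bvn_density_flip_x sx sy rho x y : bvn_density sx sy (- rho) x y = bvn_density sx sy rho (- x) y.
Proof.
  unfold bvn_density. replace ((- rho) ^ 2) with (rho ^ 2) by ring.
  do 3 f_equal. unfold Rdiv. ring.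
Qed.

Lemma bvn_prob_flip_y sx sy rho (C : R -> R -> Prop) :
  bvn_prob sx sy rho C = bvn_prob sx sy (- rho) (fun x y => C x (- y)).
Proof.
  unfold bvn_prob. f_equal. apply functional_extensionality; intro n. f_equal.
  apply functional_extensionality; intro x.
  rewrite <- (Defs_RInt_comp_opp (fun y => bvn_density sx sy rho x y * Defs.ind (C x y))).
  f_equal. apply functional_extensionality; intro y. now rewrite bvn_density_flip_y.
Qed.

Lemma bvn_prob_flip_x sx sy rho (C : R -> R -> Prop) :
  bvn_prob sx sy rho C = bvn_prob sx sy (- rho) (fun x y => C (- x) y).
Proof.
  unfold bvn_prob. f_equal. apply functional_extensionality; intro n.
  rewrite <- (Defs_RInt_comp_opp (fun x => Defs.RInt (fun y => bvn_density sx sy rho x y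
                                                         * Defs.ind (C x y)) (- INR n) (INR n))).
  f_equal. apply functional_extensionality; intro x. f_equal.
  apply functional_extensionality; intro y. now rewrite bvn_density_flip_x.
Qed.

Definition clamp (a b c : R) : R := Rmax a (Rmin c b).

Lemma clamp_bounds a b c : a <= b -> a <= clamp a b c <= b.
Proof. intros. unfold clamp, Rmax, Rmin. repeat destruct Rle_dec; lra. Qed.

Lemma clamp_lt_l a b c y : a < y < clamp a b c -> y < c.
Proof. unfold clamp, Rmax, Rmin. repeat destruct Rle_dec; lra. Qed.

Lemma clamp_lt_r a b c y : clamp a b c < y < b -> c < y.
Proof. unfold clamp, Rmax, Rmin. repeat destruct Rle_dec; lra. Qed.

Lemma clamp_id a b c : a <= c <= b -> clamp a b c = c.
Proof. intros. unfold clamp, Rmax, Rmin. repeat destruct Rle_dec; lra. Qed.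

Lemma clamp_r a b c : a <= b -> b <= c -> clamp a b c = b.
Proof. intros. unfold clamp, Rmax, Rmin. repeat destruct Rle_dec; lra. Qed.

Lemma clamp_l a b c : a <= b -> c <= a -> clamp a b c = a.
Proof. intros. unfold clamp, Rmax, Rmin. repeat destruct Rle_dec; lra. Qed.

Lemma clamp_continuity_pt a b (L : R -> R) x :
  continuity_pt L x -> continuity_pt (fun x => clamp a b (L x)) x.
Proof.
  intros HL. unfold clamp.
  assert (Hmax : forall u v, Rmax u v = (u + v + Rabs (u - v)) / 2)
    by (intros; unfold Rmax, Rabs; repeat destruct Rle_dec; repeat destruct Rcase_abs; lra).
  assert (Hmin : forall u v, Rmin u v = (u + v - Rabs (u - v)) / 2)
    by (intros; unfold Rmin, Rabs; repeat destruct Rle_dec; repeat destruct Rcase_abs; lra).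
  assert (Hc : forall k : R, continuity_pt (fun _ => k) x)
    by (intros; apply continuity_pt_const; intros ??; auto).
  assert (HA : forall g, continuity_pt g x -> continuity_pt (fun x => Rabs (g x)) x)
    by (intros g Hg; apply (continuity_pt_comp g Rabs); auto; apply Rcontinuity_abs).
  set (m x := (L x + b - Rabs (L x - b)) / 2).
  assert (Hm : continuity_pt m x).
  { unfold m, Rdiv. apply continuity_pt_mult; auto. apply continuity_pt_minus;
      [apply continuity_pt_plus | apply HA, continuity_pt_minus]; auto. }
  apply (continuity_pt_ext (fun x => (a + m x + Rabs (a - m x)) / 2));
    [intros; now rewrite Hmax, Hmin|].
  unfold Rdiv. apply continuity_pt_mult; auto.
  apply continuity_pt_plus; [apply continuity_pt_plus | apply HA, continuity_pt_minus]; auto.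
Qed.

Definition phis (s x : R) : R := phi (x / s) / s.

Lemma phis_pos s x : 0 < s -> 0 < phis s x.
Proof. intros. apply Rdiv_lt_0_compat; [apply phi_pos | auto]. Qed.

Lemma phi_comp_continuity_pt g x : continuity_pt g x -> continuity_pt (fun x => phi (g x)) x.
Proof. intro. apply (continuity_pt_comp g phi); auto. apply phi_continuity_pt. Qed.

Lemma phis_comp_continuity_pt s g x : continuity_pt g x -> continuity_pt (fun x => phis s (g x)) x.
Proof.
  intro. unfold phis, Rdiv. apply continuity_pt_mult; [|apply continuity_pt_const; intros ??; auto].
  apply phi_comp_continuity_pt, continuity_pt_mult; auto.
  apply continuity_pt_const; intros ??; auto.
Qed.

Lemma Q_comp_continuity_pt g x : continuity_pt g x -> continuity_pt (fun x => Q (g x)) x.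
Proof. intro. apply (continuity_pt_comp g Q); auto. apply Q_continuity_pt. Qed.

(* Constant functions are recognised syntactically: [reflexivity] on [Q a = Q b] would try to
   compute with real numbers. *)
Ltac solve_continuity_pt :=
  unfold Rdiv, Rminus;
  repeat first
    [ apply continuity_pt_id
    | lazymatch goal with |- continuity_pt (fun _ => ?k) _ =>
        apply continuity_pt_const; intros ??; reflexivity end
    | apply phi_comp_continuity_pt | apply phis_comp_continuity_pt
    | apply Q_comp_continuity_pt | apply clamp_continuity_pt
    | apply continuity_pt_mult | apply continuity_pt_plus | apply continuity_pt_opp ].

Lemma RInt_phi_affine r c a b : 0 < r ->
  RInt (fun t => phi (r * t + c)) a b = (Q (r * a + c) - Q (r * b + c)) / r.
Proof.
  intros Hr.
  rewrite (RInt_ext_R _ (fun t => / r * (r * phi (r * t + c)))) by (intros; field; lra).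
  rewrite RInt_scal_R by apply ex_RInt_comp_lin_R, ex_RInt_phi.
  rewrite RInt_comp_lin_R, RInt_phi by apply ex_RInt_phi.
  R_eq. unfold Rdiv. ring.
Qed.

Lemma RInt_phis_shift s m a b : 0 < s ->
  RInt (fun y => phis s (y - m)) a b = Q ((a - m) / s) - Q ((b - m) / s).
Proof.
  intros Hs.
  rewrite (RInt_ext_R _ (fun y => / s * phi (/ s * y + - m / s)))
    by (intros; unfold phis; replace (/ s * x + - m / s) with ((x - m) / s) by (field; lra);
        unfold Rdiv; ring).
  rewrite RInt_scal_R by (apply ex_RInt_of_continuity_pt; intro; solve_continuity_pt).
  rewrite RInt_phi_affine by (apply Rinv_0_lt_compat; lra).
  replace (/ s * a + - m / s) with ((a - m) / s) by (field; lra).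
  replace (/ s * b + - m / s) with ((b - m) / s) by (field; lra).
  R_eq. field. lra.
Qed.

Lemma RInt_phis s a b : 0 < s -> RInt (phis s) a b = Q (a / s) - Q (b / s).
Proof.
  intros Hs. rewrite (RInt_ext_R _ (fun y => phis s (y - 0))) by (intros; now rewrite Rminus_0_r).
  rewrite RInt_phis_shift by auto. now rewrite !Rminus_0_r.
Qed.

(** * Gaussian mixtures of the tail function *)

Lemma phi_mul_phi_affine al r u s : 0 < r -> r * r = 1 + al * al ->
  phi u * phi (al * u + s) = phi (r * u + al * s / r) * phi (s / r).
Proof.
  intros Hr Hr2. unfold phi, gauss. generalize sqrt2pi_pos; intro.
  assert (E : - (u * u) / 2 + - ((al * u + s) * (al * u + s)) / 2 =
              - ((r * u + al * s / r) * (r * u + al * s / r)) / 2 + - (s / r * (s / r)) / 2).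
  { assert (E1 : (r * u + al * s / r) * (r * u + al * s / r)
                 = r * r * (u * u) + 2 * al * u * s + al * al * (s * s) / (r * r)) by (field; lra).
    assert (E2 : s / r * (s / r) = s * s / (r * r)) by (field; lra).
    rewrite E1, E2, Hr2. field. nra. }
  transitivity (exp (- (u * u) / 2 + - ((al * u + s) * (al * u + s)) / 2) / (sqrt2pi * sqrt2pi)).
  - rewrite exp_plus. field. lra.
  - rewrite E, exp_plus. field. lra.
Qed.

Definition mixed_tail (al S b : R) : R := RInt (fun u => phi u * Q (al * u + b)) (- S) S.

(* [window al r S s] is the mass of the normal law [N (- al s / r^2, 1 / r^2)] on [[-S, S]]. *)
Definition window (al r S s : R) : R := Q (r * - S + al * s / r) - Q (r * S + al * s / r).

Lemma ex_RInt_mixed_tail_integrand al b a c : ex_RInt (fun u => phi u * Q (al * u + b)) a c.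
Proof. apply ex_RInt_of_continuity_pt. intro. solve_continuity_pt. Qed.

Lemma mixed_tail_deriv al r S b : 0 < r -> r * r = 1 + al * al ->
  is_derive (mixed_tail al S) b (- (phis r b * window al r S b)).
Proof.
  intros Hr Hr2.
  assert (D : forall t z, is_derive (fun z => phi t * Q (al * t + z)) z (phi t * - phi (al * t + z))).
  { intros. apply is_derive_scal.
    replace (- phi (al * t + z)) with (1 * - phi (al * t + z)) by ring.
    apply (is_derive_comp Q (fun z => al * t + z)); [apply Q_deriv | auto_derive; auto]. }
  replace (- (phis r b * window al r S b))
    with (RInt (fun t => Derive (fun z => phi t * Q (al * t + z)) b) (- S) S).
  - apply (is_derive_RInt_param (fun z u => phi u * Q (al * u + z))).
    + apply filter_forall. intros; eexists; apply D.
    + intros t _. eapply continuity_2d_pt_ext.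
      2: { apply (continuity_2d_pt_mult (fun _ u => phi u) (fun z u => - phi (al * u + z))).
           - apply continuity_1d_2d_pt_comp with (f := phi) (g := fun _ v => v);
               [apply phi_continuity_pt | apply continuity_2d_pt_id2].
           - apply continuity_2d_pt_opp.
             apply continuity_1d_2d_pt_comp with (f := phi) (g := fun z u => al * u + z);
               [apply phi_continuity_pt|].
             apply continuity_2d_pt_plus; [|apply continuity_2d_pt_id1].
             apply continuity_2d_pt_mult;
               [apply continuity_2d_pt_const | apply continuity_2d_pt_id2]. }
      intros x y. simpl. symmetry. apply is_derive_unique, D.
    + apply filter_forall; intros. apply ex_RInt_mixed_tail_integrand.
  - rewrite (RInt_ext_R _ (fun t => (- phi (b / r)) * phi (r * t + al * b / r))).
    + rewrite RInt_scal_R by (apply ex_RInt_of_continuity_pt; intro; solve_continuity_pt).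
      rewrite RInt_phi_affine by auto. unfold window, phis. R_eq. field. lra.
    + intros t _. transitivity (phi t * - phi (al * t + b)); [apply is_derive_unique, D|].
      rewrite <- Ropp_mult_distr_r, (phi_mul_phi_affine al r t b Hr Hr2). ring.
Qed.

Lemma ex_RInt_phis_window al r S a b : ex_RInt (fun s => phis r s * window al r S s) a b.
Proof. apply ex_RInt_of_continuity_pt. intro. unfold window. solve_continuity_pt. Qed.

Lemma mixed_tail_FTC al r S b B : 0 < r -> r * r = 1 + al * al ->
  mixed_tail al S b = mixed_tail al S B + RInt (fun s => phis r s * window al r S s) b B.
Proof.
  intros Hr Hr2.
  assert (H : is_RInt (fun s => - (phis r s * window al r S s)) b B
                      (minus (mixed_tail al S B) (mixed_tail al S b))).
  { apply (@is_RInt_derive R_CompleteNormedModule (mixed_tail al S)).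
    - intros; apply mixed_tail_deriv; auto.
    - intros. apply continuous_of_continuity_pt. unfold window. solve_continuity_pt. }
  apply is_RInt_unique_R in H.
  rewrite (RInt_ext_R _ (fun s => -1 * (- (phis r s * window al r S s)))) by (intros; ring).
  rewrite RInt_scal_R, H.
  - unfold minus, plus, opp; simpl. ring.
  - apply (ex_RInt_ext_R (fun s => -1 * (phis r s * window al r S s))); [intros; ring|].
    apply ex_RInt_scal_R, ex_RInt_phis_window.
Qed.

Lemma window_eq al r S s : window al r S s = 1 - Q (r * S + al * s / r) - Q (r * S - al * s / r).
Proof.
  unfold window. replace (r * - S + al * s / r) with (- (r * S - al * s / r)) by ring.
  rewrite Q_opp. ring.
Qed.

Lemma mixed_tail_bounds al S b : 0 <= S -> 0 <= mixed_tail al S b <= Q (b - Rabs al * S).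
Proof.
  intros HS. unfold mixed_tail. split.
  - apply RInt_ge_0; [lra | apply ex_RInt_mixed_tail_integrand |].
    intros. apply Rmult_le_pos; [left; apply phi_pos | apply Q_nonneg].
  - apply Rle_trans with (RInt (fun u => Q (b - Rabs al * S) * phi u) (- S) S).
    + apply RInt_le; [lra | apply ex_RInt_mixed_tail_integrand | apply ex_RInt_scal_R, ex_RInt_phi |].
      intros u Hu. rewrite Rmult_comm. apply Rmult_le_compat_r; [left; apply phi_pos|].
      apply Q_antitone. assert (Rabs (al * u) <= Rabs al * S).
      { rewrite Rabs_mult. apply Rmult_le_compat_l; [apply Rabs_pos | apply Rabs_le; lra]. }
      generalize (Rle_abs (- (al * u))). rewrite Rabs_Ropp. lra.
    + rewrite RInt_scal_R, RInt_phi, Q_opp by apply ex_RInt_phi.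
      generalize (Q_nonneg (b - Rabs al * S)) (Q_nonneg S). nra.
Qed.

Definition trunc_reach (al S : R) : R := (Rabs al + / (1 + Rabs al)) * S.
Definition trunc_edge (al S : R) : R := S / ((1 + Rabs al) * sqrt (1 + al * al)).

Lemma sqrt_1_plus_sqr_ge_1 al : 1 <= sqrt (1 + al * al).
Proof. apply Rle_trans with (sqrt 1); [rewrite sqrt_1; lra | apply sqrt_le_1_alt; nra]. Qed.

Lemma sqrt_1_plus_sqr_sqr al : sqrt (1 + al * al) * sqrt (1 + al * al) = 1 + al * al.
Proof. apply sqrt_sqrt. nra. Qed.

(* For [|s| <= reach] both tails of the window have argument at least
   [r S - |al| reach / r = edge], where [r = sqrt (1 + al^2)]. *)
Lemma window_bounds al S s : 0 < S -> Rabs s <= trunc_reach al S ->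
  1 - 2 * Q (trunc_edge al S) <= window al (sqrt (1 + al * al)) S s <= 1.
Proof.
  intros HS Hs. unfold trunc_reach, trunc_edge in *.
  set (r := sqrt (1 + al * al)). set (aa := Rabs al) in *.
  assert (Hr1 := sqrt_1_plus_sqr_ge_1 al). assert (Hr2 := sqrt_1_plus_sqr_sqr al). fold r in Hr1, Hr2.
  assert (Haa : 0 <= aa) by apply Rabs_pos.
  assert (Haa2 : aa * aa = al * al) by (unfold aa; rewrite <- Rabs_mult; apply Rabs_pos_eq; nra).
  assert (Hedge : S / ((1 + aa) * r) <= r * S - aa * Rabs s / r).
  { assert (aa * Rabs s / r <= aa * ((aa + / (1 + aa)) * S) / r)
      by (unfold Rdiv; apply Rmult_le_compat_r, Rmult_le_compat_l;
          [left; apply Rinv_0_lt_compat|..]; lra).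
    replace (S / ((1 + aa) * r)) with (r * S - aa * ((aa + / (1 + aa)) * S) / r); [lra|].
    apply Rmult_eq_reg_r with ((1 + aa) * r); [|nra].
    field_simplify; [|lra..]. replace (r ^ 2) with (r * r) by ring. rewrite Hr2, <- Haa2. ring. }
  assert (Hal : Rabs (al * s / r) = aa * Rabs s / r)
    by (unfold Rdiv; rewrite !Rabs_mult, Rabs_inv, (Rabs_pos_eq r); [reflexivity | lra]).
  generalize (Rle_abs (al * s / r)) (Rle_abs (- (al * s / r))). rewrite Rabs_Ropp, Hal. intros.
  rewrite window_eq.
  assert (Q (r * S + al * s / r) <= Q (S / ((1 + aa) * r))) by (apply Q_antitone; lra).
  assert (Q (r * S - al * s / r) <= Q (S / ((1 + aa) * r))) by (apply Q_antitone; lra).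
  generalize (Q_nonneg (r * S + al * s / r)) (Q_nonneg (r * S - al * s / r)). lra.
Qed.

(* By [mixed_tail_FTC] from [b] to [B = trunc_reach al S], where the mixture is negligible,
   and since the window is close to 1 on [[b, B]]. *)
Lemma mixed_tail_approx al S b : 0 < S -> Rabs b <= trunc_reach al S ->
  Rabs (mixed_tail al S b - Q (b / sqrt (1 + al * al))) <= 4 * Q (trunc_edge al S).
Proof.
  intros HS Hb.
  set (r := sqrt (1 + al * al)). set (B := trunc_reach al S). set (Q0 := Q (trunc_edge al S)).
  assert (Hr1 := sqrt_1_plus_sqr_ge_1 al). assert (Hr2 := sqrt_1_plus_sqr_sqr al). fold r in Hr1, Hr2.
  assert (Haa := Rabs_pos al).
  assert (Hinv : 0 < / (1 + Rabs al)) by (apply Rinv_0_lt_compat; lra).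
  assert (HbB : b <= B) by (generalize (Rle_abs b); unfold B; lra).
  assert (HQ0 : 0 <= Q0) by apply Q_nonneg.
  assert (HW : forall s, b <= s <= B -> 1 - 2 * Q0 <= window al r S s <= 1).
  { intros s Hs. apply window_bounds; auto. apply Rabs_le. generalize (Rle_abs (- b)).
    rewrite Rabs_Ropp. unfold B in *. lra. }
  assert (HQBr : Q (B / r) <= Q0).
  { apply Q_antitone. unfold B, trunc_reach, trunc_edge. fold r. unfold Rdiv.
    rewrite Rinv_mult, <- Rmult_assoc. apply Rmult_le_compat_r; [left; apply Rinv_0_lt_compat; lra|].
    rewrite Rmult_comm. apply Rmult_le_compat_r; lra. }
  assert (HfarB : mixed_tail al S B <= Q0).
  { apply Rle_trans with (Q (B - Rabs al * S)); [apply mixed_tail_bounds; lra|].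
    apply Q_antitone. unfold B, trunc_reach, trunc_edge. fold r.
    replace ((Rabs al + / (1 + Rabs al)) * S - Rabs al * S) with (S / (1 + Rabs al)) by (field; lra).
    unfold Rdiv. rewrite Rinv_mult. apply Rmult_le_compat_l; [lra|].
    rewrite <- (Rmult_1_r (/ (1 + Rabs al))) at 2. apply Rmult_le_compat_l; [lra|].
    rewrite <- Rinv_1. apply Rinv_le_contravar; lra. }
  assert (HfarB0 : 0 <= mixed_tail al S B) by (apply mixed_tail_bounds; lra).
  assert (Iphis : RInt (phis r) b B = Q (b / r) - Q (B / r)) by (apply RInt_phis; lra).
  assert (exP : ex_RInt (phis r) b B) by (apply ex_RInt_of_continuity_pt; intro; solve_continuity_pt).
  assert (Aup : RInt (fun s => phis r s * window al r S s) b B <= Q (b / r) - Q (B / r)).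
  { rewrite <- Iphis. apply RInt_le; auto using ex_RInt_phis_window.
    intros s Hs. generalize (HW s ltac:(lra)) (phis_pos r s ltac:(lra)). nra. }
  assert (Alow : (1 - 2 * Q0) * (Q (b / r) - Q (B / r))
                 <= RInt (fun s => phis r s * window al r S s) b B).
  { rewrite <- Iphis, <- RInt_scal_R by auto.
    apply RInt_le; auto using ex_RInt_phis_window, ex_RInt_scal_R.
    intros s Hs. generalize (HW s ltac:(lra)) (phis_pos r s ltac:(lra)). nra. }
  assert (HX : 0 <= Q (b / r) - Q (B / r) <= 1).
  { generalize (Q_nonneg (B / r)) (Q_le_1 (b / r)).
    assert (Q (B / r) <= Q (b / r)); [|lra].
    apply Q_antitone. unfold Rdiv. apply Rmult_le_compat_r; [left; apply Rinv_0_lt_compat|]; lra. }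
  rewrite (mixed_tail_FTC al r S b B) by lra.
  apply Rabs_le. generalize (Q_nonneg (B / r)). nra.
Qed.

Lemma RInt_close (f g h : R -> R) a b k : a <= b ->
  ex_RInt f a b -> ex_RInt g a b -> ex_RInt h a b ->
  (forall x, a < x < b -> Rabs (f x - g x) <= k * h x) ->
  Rabs (RInt f a b - RInt g a b) <= k * RInt h a b.
Proof.
  intros Hab Hf Hg Hh Hpt.
  assert (Hd : ex_RInt (fun x => f x - g x) a b) by (apply ex_RInt_minus_R; auto).
  rewrite <- (RInt_minus_R f g), <- (RInt_scal_R h) by auto.
  apply Rabs_le. split.
  - apply Rle_trans with (RInt (fun x => -1 * (k * h x)) a b).
    + rewrite (RInt_scal_R (fun x => k * h x)) by (apply ex_RInt_scal_R; auto). lra.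
    + apply RInt_le; auto using ex_RInt_scal_R.
      intros x Hx. generalize (Rle_abs (- (f x - g x))). rewrite Rabs_Ropp. generalize (Hpt x Hx). lra.
  - apply RInt_le; auto using ex_RInt_scal_R.
    intros x Hx. generalize (Rle_abs (f x - g x)) (Hpt x Hx). lra.
Qed.

Lemma RInt_phis_bounds s a b : 0 < s -> a <= b -> 0 <= RInt (phis s) a b <= 1.
Proof.
  intros Hs Hab. rewrite RInt_phis by auto.
  assert (Q (b / s) <= Q (a / s))
    by (apply Q_antitone; unfold Rdiv; apply Rmult_le_compat_r; [left; apply Rinv_0_lt_compat|]; lra).
  generalize (Q_nonneg (b / s)) (Q_le_1 (a / s)). lra.
Qed.

Lemma ex_RInt_phis s a b : ex_RInt (phis s) a b.
Proof. apply ex_RInt_of_continuity_pt. intro. solve_continuity_pt. Qed.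

(** * Half-plane probabilities *)

Definition tau (sg rho : R) : R := sg * sqrt (1 - rho * rho).

Lemma tau_pos sg rho : 0 < sg -> -1 < rho < 1 -> 0 < tau sg rho.
Proof. intros. apply Rmult_lt_0_compat; auto. apply sqrt_lt_R0. nra. Qed.

(* Marginal density of [xi] times the conditional density of [eta] given [xi = x]. *)
Lemma bvn_density_factor sg rho x y : 0 < sg -> -1 < rho < 1 ->
  bvn_density sg sg rho x y = phis sg x * phis (tau sg rho) (y - rho * x).
Proof.
  intros Hs Hr. unfold bvn_density, phis, phi, gauss, tau.
  set (s1 := sqrt (1 - rho * rho)).
  assert (Hs1 : 0 < s1) by (apply sqrt_lt_R0; nra).
  assert (Hs12 : s1 * s1 = 1 - rho * rho) by (apply sqrt_sqrt; nra).
  replace (sqrt (1 - rho ^ 2)) with s1 by (unfold s1; f_equal; ring).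
  assert (Hq := sqrt2pi_sqr). assert (Hq0 := sqrt2pi_pos).
  replace (- / (2 * (1 - rho ^ 2)) * (x ^ 2 / sg ^ 2 - 2 * rho * x * y / (sg * sg) + y ^ 2 / sg ^ 2))
    with (- (x / sg * (x / sg)) / 2 + - ((y - rho * x) / (sg * s1) * ((y - rho * x) / (sg * s1))) / 2).
  - rewrite exp_plus. replace (2 * PI) with (sqrt2pi * sqrt2pi) by lra. field. repeat split; lra.
  - replace ((y - rho * x) / (sg * s1) * ((y - rho * x) / (sg * s1)))
      with ((y - rho * x) * (y - rho * x) / (sg * sg * (1 - rho * rho)))
      by (rewrite <- Hs12; field; lra).
    replace (rho ^ 2) with (rho * rho) by ring. field. split; [lra | nra].
Qed.

Lemma RInt_cut (h : R -> R) a b c : a <= b -> (forall x, continuous h x) ->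
  ex_RInt (fun y => h y * Defs.ind (y > c)) a b /\
  RInt (fun y => h y * Defs.ind (y > c)) a b = RInt h (clamp a b c) b.
Proof.
  intros Hab Hh. set (m := clamp a b c).
  assert (Hm := clamp_bounds a b c Hab). fold m in Hm.
  assert (Hlo : forall y, Rmin a m < y < Rmax a m -> h y * Defs.ind (y > c) = 0).
  { intros y Hy. rewrite Rmin_left, Rmax_right in Hy by lra.
    rewrite ind_0; [ring|]. assert (y < c) by (apply (clamp_lt_l a b c); fold m; lra). lra. }
  assert (Hhi : forall y, Rmin m b < y < Rmax m b -> h y * Defs.ind (y > c) = h y).
  { intros y Hy. rewrite Rmin_left, Rmax_right in Hy by lra.
    rewrite ind_1; [ring|]. apply (clamp_lt_r a b c); fold m; lra. }
  assert (E1 : ex_RInt (fun y => h y * Defs.ind (y > c)) a m).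
  { apply (ex_RInt_ext_R (fun _ => 0)); [intros; symmetry; auto|].
    apply ex_RInt_of_continuous; intros; apply continuous_const. }
  assert (E2 : ex_RInt (fun y => h y * Defs.ind (y > c)) m b).
  { apply (ex_RInt_ext_R h); [intros; symmetry; auto | apply ex_RInt_of_continuous; auto]. }
  split; [eapply ex_RInt_Chasles_R; eauto|].
  rewrite <- (RInt_Chasles_R _ a m b E1 E2), (RInt_ext_R _ (fun _ => 0) a m), (RInt_ext_R _ h m b)
    by auto.
  rewrite RInt_const_R. R_eq. ring.
Qed.

Lemma cond_tails_le sg rho T x : 0 < sg -> -1 < rho < 1 -> - T <= x <= T ->
  Q ((T - rho * x) / tau sg rho) + Q ((T + rho * x) / tau sg rho)
  <= 2 * Q (T * (1 - Rabs rho) / tau sg rho).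
Proof.
  intros Hs Hr Hx. assert (Ht := tau_pos sg rho Hs Hr).
  assert (Hrx : Rabs (rho * x) <= Rabs rho * T).
  { rewrite Rabs_mult. apply Rmult_le_compat_l; [apply Rabs_pos | apply Rabs_le; lra]. }
  generalize (Rle_abs (rho * x)) (Rle_abs (- (rho * x))). rewrite Rabs_Ropp. intros.
  assert (Hdiv : forall u v, u <= v -> u / tau sg rho <= v / tau sg rho)
    by (intros; unfold Rdiv; apply Rmult_le_compat_r; [left; apply Rinv_0_lt_compat|]; lra).
  assert (Q ((T - rho * x) / tau sg rho) <= Q (T * (1 - Rabs rho) / tau sg rho))
    by (apply Q_antitone, Hdiv; lra).
  assert (Q ((T + rho * x) / tau sg rho) <= Q (T * (1 - Rabs rho) / tau sg rho))
    by (apply Q_antitone, Hdiv; lra).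
  lra.
Qed.

Lemma Q_le_inv_scaled T k : 0 < T -> 0 < k -> Q (T / k) <= k / T.
Proof.
  intros. replace (k / T) with (/ (T / k)) by (field; lra). apply Q_le_inv, Rdiv_lt_0_compat; lra.
Qed.

Section PositiveSlope.

Variables (sg rho p q d : R).
Hypotheses (Hsg : 0 < sg) (Hrho : -1 < rho < 1) (Hq : 0 < q).

Definition inner_trunc (T x : R) : R :=
  phis sg x * (Q ((clamp (- T) T ((d - p * x) / q) - rho * x) / tau sg rho)
               - Q ((T - rho * x) / tau sg rho)).

Definition inner_ideal (x : R) : R := phis sg x * Q (((d - p * x) / q - rho * x) / tau sg rho).

Lemma inner_integral_pos T x : 0 <= T ->
  Defs.RInt (fun y => bvn_density sg sg rho x y * Defs.ind (p * x + q * y > d)) (- T) T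
  = inner_trunc T x.
Proof.
  intros HT. assert (Ht := tau_pos sg rho Hsg Hrho).
  set (h y := phis sg x * phis (tau sg rho) (y - rho * x)).
  assert (Hh : forall y, continuous h y)
    by (intro; apply continuous_of_continuity_pt; unfold h; solve_continuity_pt).
  replace (fun y => bvn_density sg sg rho x y * Defs.ind (p * x + q * y > d))
    with (fun y => h y * Defs.ind (y > (d - p * x) / q)).
  2: { apply functional_extensionality. intro y. unfold h. rewrite bvn_density_factor by auto.
       f_equal. apply ind_iff.
       unfold Rgt. rewrite Rlt_div_l by lra. lra. }
  destruct (RInt_cut h (- T) T ((d - p * x) / q) ltac:(lra) Hh) as [Hex Hcut].
  rewrite Defs_RInt_eq, Hcut by exact Hex.
  unfold h. rewrite RInt_scal_R, RInt_phis_shift by (auto; apply ex_RInt_of_continuity_pt; intro;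
                                                    solve_continuity_pt).
  reflexivity.
Qed.

Lemma inner_trunc_close T x : 0 <= T -> - T <= x <= T ->
  Rabs (inner_trunc T x - inner_ideal x) <= 2 * Q (T * (1 - Rabs rho) / tau sg rho) * phis sg x.
Proof.
  intros HT Hx. unfold inner_trunc, inner_ideal.
  assert (Ht := tau_pos sg rho Hsg Hrho). set (t := tau sg rho) in *.
  assert (Hp := phis_pos sg x Hsg).
  assert (Htails := cond_tails_le sg rho T x Hsg Hrho Hx). fold t in Htails.
  set (L := (d - p * x) / q).
  set (a := (T - rho * x) / t) in *. set (l := (L - rho * x) / t). set (b := (- T - rho * x) / t).
  replace ((T + rho * x) / t) with (- b) in Htails by (unfold b; field; lra).
  rewrite Q_opp in Htails.
  assert (Hdiv : forall u v, u <= v -> u / t <= v / t)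
    by (intros; unfold Rdiv; apply Rmult_le_compat_r; [left; apply Rinv_0_lt_compat|]; lra).
  replace (phis sg x * (Q ((clamp (- T) T L - rho * x) / t) - Q a) - phis sg x * Q l)
    with (phis sg x * (Q ((clamp (- T) T L - rho * x) / t) - Q a - Q l)) by ring.
  rewrite Rabs_mult, (Rabs_pos_eq (phis sg x)), (Rmult_comm _ (phis sg x)) by lra.
  apply Rmult_le_compat_l; [lra|]. apply Rle_trans with (Q a + (1 - Q b)); [|lra].
  generalize (Q_nonneg a) (Q_nonneg l) (Q_le_1 l) (Q_le_1 b). intros Ha Hl Hl1 Hb.
  destruct (Rle_dec L T) as [H1|H1]; [destruct (Rle_dec (- T) L) as [H2|H2]|].
  - rewrite clamp_id by lra. fold l. rewrite Rabs_left1; lra.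
  - rewrite clamp_l by lra. fold b. assert (Q b <= Q l) by (apply Q_antitone, Hdiv; lra).
    apply Rabs_le. lra.
  - rewrite clamp_r by lra. fold a. assert (Q l <= Q a) by (apply Q_antitone, Hdiv; lra).
    rewrite Rminus_diag, Rminus_0_l, Rabs_Ropp, Rabs_pos_eq; lra.
Qed.

Definition mix_slope : R := - (p / q + rho) * sg / tau sg rho.
Definition mix_shift : R := d / (q * tau sg rho).

Lemma RInt_inner_ideal T : RInt inner_ideal (- T) T = mixed_tail mix_slope (T / sg) mix_shift.
Proof.
  assert (Ht := tau_pos sg rho Hsg Hrho). unfold mixed_tail.
  assert (H := RInt_comp_lin_R (fun u => phi u * Q (mix_slope * u + mix_shift)) (/ sg) 0 (- T) T
                 (ex_RInt_mixed_tail_integrand _ _ _ _)).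
  replace (/ sg * - T + 0) with (- (T / sg)) in H by (field; lra).
  replace (/ sg * T + 0) with (T / sg) in H by (field; lra).
  rewrite <- H.
  apply RInt_ext_R. intros x _. unfold inner_ideal, phis, mix_slope, mix_shift.
  replace (/ sg * x + 0) with (x / sg) by (field; lra).
  replace (- (p / q + rho) * sg / tau sg rho * (x / sg) + d / (q * tau sg rho))
    with (((d - p * x) / q - rho * x) / tau sg rho) by (field; lra).
  unfold Rdiv. ring.
Qed.

Lemma ex_RInt_inner_trunc T a b : ex_RInt (inner_trunc T) a b.
Proof. apply ex_RInt_of_continuity_pt. intro. unfold inner_trunc. solve_continuity_pt. Qed.

Lemma ex_RInt_inner_ideal a b : ex_RInt inner_ideal a b.
Proof. apply ex_RInt_of_continuity_pt. intro. unfold inner_ideal. solve_continuity_pt. Qed.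

Lemma RInt_inner_trunc_close T : 0 <= T ->
  Rabs (RInt (inner_trunc T) (- T) T - RInt inner_ideal (- T) T)
  <= 2 * Q (T * (1 - Rabs rho) / tau sg rho).
Proof.
  intros HT. eapply Rle_trans.
  - apply (RInt_close _ _ (phis sg));
      auto using ex_RInt_inner_trunc, ex_RInt_inner_ideal, ex_RInt_phis; [lra|].
    intros. apply inner_trunc_close; lra.
  - generalize (RInt_phis_bounds sg (- T) T Hsg ltac:(lra))
      (Q_nonneg (T * (1 - Rabs rho) / tau sg rho)). nra.
Qed.

Lemma RInt_inner_trunc_error T : 0 < T -> Rabs mix_shift <= trunc_reach mix_slope (T / sg) ->
  Rabs (RInt (inner_trunc T) (- T) T - Q (mix_shift / sqrt (1 + mix_slope * mix_slope)))
  <= 2 * Q (T * (1 - Rabs rho) / tau sg rho) + 4 * Q (trunc_edge mix_slope (T / sg)).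
Proof.
  intros HT Hb.
  assert (E1 := RInt_inner_trunc_close T ltac:(lra)). rewrite RInt_inner_ideal in E1.
  assert (E2 := mixed_tail_approx mix_slope (T / sg) mix_shift ltac:(apply Rdiv_lt_0_compat; lra) Hb).
  set (m := mixed_tail mix_slope (T / sg) mix_shift) in *.
  generalize (Rabs_triang (RInt (inner_trunc T) (- T) T - m)
                          (m - Q (mix_shift / sqrt (1 + mix_slope * mix_slope)))).
  replace (RInt (inner_trunc T) (- T) T - m + (m - Q (mix_shift / sqrt (1 + mix_slope * mix_slope))))
    with (RInt (inner_trunc T) (- T) T - Q (mix_shift / sqrt (1 + mix_slope * mix_slope))) by ring.
  lra.
Qed.

Lemma half_plane_pos_cv :
  Un_cv (bvn_trunc sg sg rho (fun x y => p * x + q * y > d))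
        (Q (mix_shift / sqrt (1 + mix_slope * mix_slope))).
Proof.
  assert (Ht := tau_pos sg rho Hsg Hrho).
  set (al := mix_slope). set (r := sqrt (1 + al * al)). set (aa := Rabs al).
  assert (Hr1 := sqrt_1_plus_sqr_ge_1 al). fold r in Hr1.
  assert (Haa : 0 <= aa) by apply Rabs_pos.
  set (kp := aa + / (1 + aa)).
  assert (Hkp : 0 < kp) by (unfold kp; assert (0 < / (1 + aa)) by (apply Rinv_0_lt_compat; lra); lra).
  set (rr := Rabs rho). assert (Hrr : rr < 1) by (unfold rr; apply Rabs_def1; lra).
  assert (HM : 0 <= Rabs mix_shift * sg / kp)
    by (apply Rdiv_le_0_compat; [apply Rmult_le_pos; [apply Rabs_pos|lra]|lra]).
  apply (Un_cv_of_rate _ _ (2 * (tau sg rho / (1 - rr)) + 4 * (sg * (1 + aa) * r))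
           (Rabs mix_shift * sg / kp)).
  intros n Hn. unfold bvn_trunc. set (T := INR n) in *. assert (HT : 0 < T) by lra.
  replace (fun x => Defs.RInt (fun y => bvn_density sg sg rho x y * Defs.ind (p * x + q * y > d))
                             (- T) T)
    with (inner_trunc T)
    by (apply functional_extensionality; intro; symmetry; apply inner_integral_pos; lra).
  rewrite Defs_RInt_eq by apply ex_RInt_inner_trunc.
  eapply Rle_trans; [apply RInt_inner_trunc_error; auto|].
  - unfold trunc_reach. fold al aa kp.
    apply (Rmult_lt_compat_r kp) in Hn; auto. unfold Rdiv in Hn |- *.
    rewrite Rmult_assoc, Rinv_l in Hn by lra.
    apply Rmult_le_reg_r with sg; auto. rewrite !Rmult_assoc, Rinv_l, Rmult_1_r by lra. lra.
  - fold al rr r.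
    assert (Q (T * (1 - rr) / tau sg rho) <= tau sg rho / (1 - rr) / T).
    { replace (T * (1 - rr) / tau sg rho) with (T / (tau sg rho / (1 - rr))) by (field; lra).
      apply Q_le_inv_scaled; [lra | apply Rdiv_lt_0_compat; lra]. }
    assert (Q (trunc_edge al (T / sg)) <= sg * (1 + aa) * r / T).
    { unfold trunc_edge. fold aa r. replace (T / sg / ((1 + aa) * r)) with (T / (sg * (1 + aa) * r))
        by (field; lra). apply Q_le_inv_scaled; [lra | repeat apply Rmult_lt_0_compat; lra]. }
    replace ((2 * (tau sg rho / (1 - rr)) + 4 * (sg * (1 + aa) * r)) / T)
      with (2 * (tau sg rho / (1 - rr) / T) + 4 * (sg * (1 + aa) * r / T)) by (field; lra).
    lra.
Qed.

End PositiveSlope.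

Lemma quad_form_nonneg rho p q : -1 < rho < 1 -> 0 <= quad_form rho p q.
Proof.
  intros Hr. destruct (Req_dec p 0) as [->|Hp]; [destruct (Req_dec q 0) as [->|Hq]|].
  - unfold quad_form. lra.
  - left; apply quad_form_pos; auto.
  - left; apply quad_form_pos; auto.
Qed.

Lemma bvn_prob_half_plane_pos sg rho p q d : 0 < sg -> -1 < rho < 1 -> 0 < q ->
  bvn_prob sg sg rho (fun x y => p * x + q * y > d) = Q (d / (sg * sqrt (quad_form rho p q))).
Proof.
  intros Hs Hr Hq. rewrite (bvn_prob_eq _ _ _ _ _ (half_plane_pos_cv sg rho p q d Hs Hr Hq)).
  f_equal. unfold mix_shift, mix_slope.
  assert (Ht := tau_pos sg rho Hs Hr).
  set (al := - (p / q + rho) * sg / tau sg rho). set (r := sqrt (1 + al * al)).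
  assert (Hr0 : 0 < r) by (generalize (sqrt_1_plus_sqr_ge_1 al); fold r; lra).
  assert (Hr2 := sqrt_1_plus_sqr_sqr al). fold r in Hr2.
  set (P := quad_form rho p q).
  assert (HP : 0 <= P) by (apply quad_form_nonneg; auto).
  assert (HsP : sqrt P * sqrt P = P) by (apply sqrt_sqrt; auto).
  assert (HsP0 := sqrt_pos P).
  assert (Htau2 : tau sg rho * tau sg rho = sg * sg * (1 - rho * rho)).
  { unfold tau. rewrite <- (sqrt_sqrt (1 - rho * rho)) at 3 by nra. ring. }
  assert (E : q * tau sg rho * r = sg * sqrt P).
  { apply Rsqr_inj; [apply Rmult_le_pos; [apply Rmult_le_pos|]; lra | apply Rmult_le_pos; lra |].
    unfold Rsqr.
    replace (q * tau sg rho * r * (q * tau sg rho * r))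
      with (q * q * (tau sg rho * tau sg rho) * (r * r))
      by ring.
    replace (sg * sqrt P * (sg * sqrt P)) with (sg * sg * (sqrt P * sqrt P)) by ring.
    rewrite Hr2, HsP. unfold al, P, quad_form.
    replace (1 + - (p / q + rho) * sg / tau sg rho * (- (p / q + rho) * sg / tau sg rho))
      with (1 + (p / q + rho) * (p / q + rho) * (sg * sg) / (tau sg rho * tau sg rho)) by (field; lra).
    rewrite Htau2. field. repeat split; nra. }
  unfold Rdiv. rewrite Rmult_assoc, <- Rinv_mult, E. reflexivity.
Qed.

Section ZeroSlope.

Variables (sg rho p d : R).
Hypotheses (Hsg : 0 < sg) (Hrho : -1 < rho < 1) (Hp : 0 < p).

Definition inner_full (T x : R) : R :=
  phis sg x * (Q ((- T - rho * x) / tau sg rho) - Q ((T - rho * x) / tau sg rho)).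

Lemma ex_RInt_inner_full T a b : ex_RInt (inner_full T) a b.
Proof. apply ex_RInt_of_continuity_pt. intro. unfold inner_full. solve_continuity_pt. Qed.

Lemma inner_integral_zero T x :
  Defs.RInt (fun y => bvn_density sg sg rho x y * Defs.ind (p * x + 0 * y > d)) (- T) T
  = inner_full T x * Defs.ind (x > d / p).
Proof.
  assert (Ht := tau_pos sg rho Hsg Hrho).
  replace (fun y => bvn_density sg sg rho x y * Defs.ind (p * x + 0 * y > d))
    with (fun y => (Defs.ind (x > d / p) * phis sg x) * phis (tau sg rho) (y - rho * x)).
  2: { apply functional_extensionality. intro y. rewrite bvn_density_factor by auto.
       rewrite (ind_iff (p * x + 0 * y > d) (x > d / p)); [ring|].
       unfold Rgt. rewrite Rlt_div_l by lra. lra. }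
  assert (Hex : ex_RInt (fun y => phis (tau sg rho) (y - rho * x)) (- T) T)
    by (apply ex_RInt_of_continuity_pt; intro; solve_continuity_pt).
  rewrite Defs_RInt_eq by now apply ex_RInt_scal_R.
  rewrite RInt_scal_R, RInt_phis_shift by assumption.
  unfold inner_full. ring.
Qed.

Lemma inner_full_close T x : - T <= x <= T ->
  Rabs (inner_full T x - phis sg x) <= 2 * Q (T * (1 - Rabs rho) / tau sg rho) * phis sg x.
Proof.
  intros Hx. assert (Ht := tau_pos sg rho Hsg Hrho).
  assert (Hp0 := phis_pos sg x Hsg).
  assert (Htails := cond_tails_le sg rho T x Hsg Hrho Hx).
  unfold inner_full. replace ((- T - rho * x) / tau sg rho) with (- ((T + rho * x) / tau sg rho))
    by (field; lra).
  rewrite Q_opp.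
  set (a := (T - rho * x) / tau sg rho) in *. set (b := (T + rho * x) / tau sg rho) in *.
  replace (phis sg x * (1 - Q b - Q a) - phis sg x) with (- (phis sg x * (Q a + Q b))) by ring.
  generalize (Q_nonneg a) (Q_nonneg b). intros.
  rewrite Rabs_Ropp, Rabs_pos_eq, (Rmult_comm _ (phis sg x)); [apply Rmult_le_compat_l|]; nra.
Qed.

Lemma half_plane_zero_cv :
  Un_cv (bvn_trunc sg sg rho (fun x y => p * x + 0 * y > d)) (Q (d / p / sg)).
Proof.
  assert (Ht := tau_pos sg rho Hsg Hrho).
  set (c := d / p).
  set (rr := Rabs rho). assert (Hrr : rr < 1) by (unfold rr; apply Rabs_def1; lra).
  assert (Hrr0 : 0 <= rr) by apply Rabs_pos.
  apply (Un_cv_of_rate _ _ (2 * (tau sg rho / (1 - rr)) + sg) (Rabs c)).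
  intros n Hn. unfold bvn_trunc. set (T := INR n) in *.
  assert (HT : 0 < T) by (generalize (Rabs_pos c); lra).
  assert (Hc : - T <= c <= T) by (generalize (Rle_abs c) (Rle_abs (- c)); rewrite Rabs_Ropp; lra).
  replace (fun x => Defs.RInt (fun y => bvn_density sg sg rho x y * Defs.ind (p * x + 0 * y > d))
                             (- T) T)
    with (fun x => inner_full T x * Defs.ind (x > c))
    by (apply functional_extensionality; intro; symmetry; apply inner_integral_zero).
  destruct (RInt_cut (inner_full T) (- T) T c ltac:(lra)) as [Hex Hcut].
  { intro. apply continuous_of_continuity_pt. unfold inner_full. solve_continuity_pt. }
  rewrite Defs_RInt_eq, Hcut, clamp_id by (auto; lra).
  assert (Err := RInt_close (inner_full T) (phis sg) (phis sg) c T (2 * Q (T * (1 - rr) / tau sg rho))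
                   ltac:(lra) (ex_RInt_inner_full _ _ _) (ex_RInt_phis _ _ _) (ex_RInt_phis _ _ _)
                   ltac:(intros; apply inner_full_close; lra)).
  assert (HI := RInt_phis_bounds sg c T Hsg ltac:(lra)).
  set (Q0 := Q (T * (1 - rr) / tau sg rho)) in *.
  assert (HQ0 : 0 <= Q0) by apply Q_nonneg.
  assert (Err' : Rabs (RInt (inner_full T) c T - RInt (phis sg) c T) <= 2 * Q0)
    by (eapply Rle_trans; [exact Err | nra]).
  rewrite RInt_phis in Err' by auto.
  assert (Q1 : Q0 <= tau sg rho / (1 - rr) / T).
  { unfold Q0. replace (T * (1 - rr) / tau sg rho) with (T / (tau sg rho / (1 - rr))) by (field; lra).
    apply Q_le_inv_scaled; [lra | apply Rdiv_lt_0_compat; lra]. }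
  assert (Q2 : Q (T / sg) <= sg / T) by (apply Q_le_inv_scaled; lra).
  assert (Q3 := Q_nonneg (T / sg)).
  replace ((2 * (tau sg rho / (1 - rr)) + sg) / T) with (2 * (tau sg rho / (1 - rr) / T) + sg / T)
    by (field; lra).
  generalize (Rle_abs (RInt (inner_full T) c T - (Q (c / sg) - Q (T / sg))))
    (Rle_abs (- (RInt (inner_full T) c T - (Q (c / sg) - Q (T / sg))))).
  rewrite Rabs_Ropp. intros. apply Rabs_le. lra.
Qed.

End ZeroSlope.

Lemma bvn_prob_half_plane_zero sg rho p d : 0 < sg -> -1 < rho < 1 -> 0 < p ->
  bvn_prob sg sg rho (fun x y => p * x + 0 * y > d) = Q (d / (sg * sqrt (quad_form rho p 0))).
Proof.
  intros Hs Hr Hp. rewrite (bvn_prob_eq _ _ _ _ _ (half_plane_zero_cv sg rho p d Hs Hr Hp)).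
  f_equal. unfold quad_form. replace (p * p + 2 * rho * p * 0 + 0 * 0) with (p * p) by ring.
  rewrite sqrt_square by lra. field. split; lra.
Qed.

(* Reflections [y |-> - y] and [x |-> - x] reduce to [q > 0], or to [q = 0 < p]. *)
Lemma bvn_prob_half_plane sg rho p q d : 0 < sg -> -1 < rho < 1 -> (p <> 0 \/ q <> 0) ->
  bvn_prob sg sg rho (fun x y => p * x + q * y > d) = Q (d / (sg * sqrt (quad_form rho p q))).
Proof.
  intros Hs Hr Hpq.
  destruct (Rtotal_order q 0) as [Hq|[->|Hq]].
  - rewrite bvn_prob_flip_y, (bvn_prob_ext _ _ _ _ (fun x y => p * x + (- q) * y > d))
      by (intros; split; intros; lra).
    rewrite bvn_prob_half_plane_pos by lra.
    now replace (quad_form (- rho) p (- q)) with (quad_form rho p q) by (unfold quad_form; ring).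
  - destruct Hpq as [Hp|]; [|lra].
    destruct (Rtotal_order p 0) as [Hp'|[|Hp']]; [|lra|apply bvn_prob_half_plane_zero; auto].
    rewrite bvn_prob_flip_x, (bvn_prob_ext _ _ _ _ (fun x y => (- p) * x + 0 * y > d))
      by (intros; split; intros; lra).
    rewrite bvn_prob_half_plane_zero by lra.
    now replace (quad_form (- rho) (- p) 0) with (quad_form rho p 0) by (unfold quad_form; ring).
  - apply bvn_prob_half_plane_pos; auto.
Qed.

(** * The payoff *)

Lemma quad_form_scale rho k w1 w2 : quad_form rho (k * w1) (k * w2) = k * k * quad_form rho w1 w2.
Proof. unfold quad_form. ring. Qed.

Lemma pair_neq_diff (a b : R * R) : a <> b -> fst b - fst a <> 0 \/ snd b - snd a <> 0.
Proof.
  intros Hab. destruct (Req_dec (fst b - fst a) 0); [right|left; auto].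
  intro. apply Hab. destruct a, b. simpl in *. f_equal; lra.
Qed.

Lemma bvn_prob_nearer sg rho (a b : R * R) : 0 < sg -> -1 < rho < 1 -> a <> b ->
  bvn_prob sg sg rho (Defs.C1 a b) = 1 - bvn_prob sg sg rho (Defs.C2 a b) /\
  bvn_prob sg sg rho (Defs.C2 a b)
  = Q ((fst b * fst b + snd b * snd b - fst a * fst a - snd a * snd a)
       / (2 * sg * sqrt (quad_form rho (fst b - fst a) (snd b - snd a)))).
Proof.
  intros Hs Hr Hab.
  set (w1 := fst b - fst a). set (w2 := snd b - snd a).
  set (e := fst b * fst b + snd b * snd b - fst a * fst a - snd a * snd a).
  assert (Hw := pair_neq_diff a b Hab). fold w1 w2 in Hw.
  assert (HS := quad_form_pos rho w1 w2 Hr Hw).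
  assert (Hsqrt : forall k, 0 < k ->
            sqrt (quad_form rho (k * w1) (k * w2)) = k * sqrt (quad_form rho w1 w2)).
  { intros k Hk. rewrite quad_form_scale, sqrt_mult, sqrt_square by nra. reflexivity. }
  assert (Hsqrt' : sqrt (quad_form rho (- 2 * w1) (- 2 * w2)) = 2 * sqrt (quad_form rho w1 w2)).
  { rewrite quad_form_scale. replace (-2 * -2) with (2 * 2) by ring.
    rewrite <- quad_form_scale. apply Hsqrt. lra. }
  rewrite (bvn_prob_ext _ _ _ (Defs.C1 a b) (fun x y => (- 2 * w1) * x + (- 2 * w2) * y > - e))
    by (intros; unfold Defs.C1, w1, w2, e; split; intro; lra).
  rewrite (bvn_prob_ext _ _ _ (Defs.C2 a b) (fun x y => (2 * w1) * x + (2 * w2) * y > e))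
    by (intros; unfold Defs.C2, w1, w2, e; split; intro; lra).
  rewrite !bvn_prob_half_plane, Hsqrt', Hsqrt by lra.
  replace (sg * (2 * sqrt (quad_form rho w1 w2))) with (2 * sg * sqrt (quad_form rho w1 w2)) by ring.
  unfold Rdiv at 1. rewrite <- Ropp_mult_distr_l, Q_opp.
  split; reflexivity.
Qed.

Lemma K_eq sg rho (a b : R * R) : 0 < sg -> -1 < rho < 1 -> a <> b ->
  K sg sg rho a b = (fst a + snd a) + ((fst b + snd b) - (fst a + snd a)) *
    Q ((fst b * fst b + snd b * snd b - fst a * fst a - snd a * snd a)
       / (2 * sg * sqrt (quad_form rho (fst b - fst a) (snd b - snd a)))).
Proof.
  intros Hs Hr Hab. destruct (bvn_prob_nearer sg rho a b Hs Hr Hab) as [E1 E2].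
  unfold K. destruct excluded_middle_informative; [contradiction|].
  rewrite E1, E2. ring.
Qed.

Lemma K_astar_le sg rho b : 0 < sg -> 0 < rho < 1 -> K sg sg rho (astar sg sg rho) b <= 0.
Proof.
  intros Hs Hr. set (c := x2star sg sg rho). assert (Hc : 0 < c) by (apply x2star_pos; lra).
  destruct (excluded_middle_informative (astar sg sg rho = b)) as [<-|Hab].
  - unfold K. destruct excluded_middle_informative; [|contradiction]. simpl. fold c. lra.
  - rewrite K_eq by (auto; lra). unfold astar. fold c. simpl.
    set (w1 := fst b - - c). set (w2 := snd b - - c).
    assert (Hw := pair_neq_diff _ _ Hab). simpl in Hw. fold c w1 w2 in Hw.
    assert (HD : 0 < sqrt (quad_form rho w1 w2)) by (apply sqrt_lt_R0, quad_form_pos; auto; lra).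
    generalize (deviation_gain_le sg rho w1 w2 Hs Hr Hw). fold c.
    set (D := sqrt (quad_form rho w1 w2)) in *.
    replace ((fst b * fst b + snd b * snd b - - c * - c - - c * - c) / (2 * sg * D))
      with (((w1 * w1 + w2 * w2) / 2 - c * (w1 + w2)) / (sg * D))
      by (unfold w1, w2; field; lra).
    replace (fst b + snd b - (- c + - c)) with (w1 + w2) by (unfold w1, w2; ring).
    lra.
Qed.

Lemma K_bstar_ge sg rho a : 0 < sg -> 0 < rho < 1 -> 0 <= K sg sg rho a (bstar sg sg rho).
Proof.
  intros Hs Hr. set (c := x2star sg sg rho). assert (Hc : 0 < c) by (apply x2star_pos; lra).
  destruct (excluded_middle_informative (a = bstar sg sg rho)) as [->|Hab].
  - unfold K. destruct excluded_middle_informative; [|contradiction]. simpl. fold c. lra.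
  - rewrite K_eq by (auto; lra). unfold bstar. fold c. simpl.
    set (w1 := c - fst a). set (w2 := c - snd a).
    assert (Hw := pair_neq_diff _ _ Hab). simpl in Hw. fold c w1 w2 in Hw.
    assert (HD : 0 < sqrt (quad_form rho w1 w2)) by (apply sqrt_lt_R0, quad_form_pos; auto; lra).
    generalize (deviation_gain_le sg rho w1 w2 Hs Hr Hw). fold c.
    set (D := sqrt (quad_form rho w1 w2)) in *.
    replace ((c * c + c * c - fst a * fst a - snd a * snd a) / (2 * sg * D))
      with (- (((w1 * w1 + w2 * w2) / 2 - c * (w1 + w2)) / (sg * D)))
      by (unfold w1, w2; field; lra).
    rewrite Q_opp.
    replace (c + c - (fst a + snd a)) with (w1 + w2) by (unfold w1, w2; ring).
    replace (fst a + snd a) with (2 * c - (w1 + w2)) by (unfold w1, w2; ring).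
    lra.
Qed.

Lemma K_astar_bstar sg rho : 0 < sg -> 0 < rho < 1 ->
  K sg sg rho (astar sg sg rho) (bstar sg sg rho) = 0.
Proof.
  intros Hs Hr. assert (Hc := x2star_pos sg rho Hs ltac:(lra)).
  assert (Hab : astar sg sg rho <> bstar sg sg rho) by (intro H; injection H; lra).
  rewrite K_eq by (auto; lra). unfold astar, bstar. simpl. set (c := x2star sg sg rho).
  replace (c * c + c * c - - c * - c - - c * - c) with 0 by ring.
  unfold Rdiv. rewrite Rmult_0_l, Q_0. field.
Qed.

Theorem mainTheorem8 (sx sy rho : R) (hsx : 0 < sx) (hsy : 0 < sy)
  (hrho : -1 < rho < 1) (heq : sx = sy) (hrho' : 0 < rho < 1) :
  forall a b : R * R,
    K sx sy rho (astar sx sy rho) b <= K sx sy rho (astar sx sy rho) (bstar sx sy rho) /\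
    K sx sy rho (astar sx sy rho) (bstar sx sy rho) = 0 /\
    0 <= K sx sy rho a (bstar sx sy rho).
Proof.
  intros a b. subst sy. rewrite K_astar_bstar by assumption.
  repeat split; [apply K_astar_le | apply K_bstar_ge]; assumption.
Qed.
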